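(* Let $k,l$ be positive integers. For $\operatorname{Re}s>1$, $$\sum_{n_{l+1}\mid n_l^k\mid\cdots\mid n_1^k}(n_1^k\cdots n_l^k\,n_{l+1})^{-s}=F_{k,l}(s)\prod_{j=2}^{l+1}\zeta(jks).$$
   Context: The sum is over all $(l+1)$-tuples of positive integers with $n_{l+1}\mid n_l^k\mid n_{l-1}^k\mid\cdots\mid n_1^k$. A positive integer $n$ is an $l$-step $k$-powerful number if for every prime $p$, $\operatorname{ord}_pn\in\{0,k,2k,\dots,(l-1)k\}$ or $\operatorname{ord}_pn\ge lk$ (here $\operatorname{ord}_pn$ is the exponent of $p$ in $n$). $F_{k,l}(s):=\sum_{n}n^{-s}$, summed over all $l$-step $k$-powerful numbers $n$. $\zeta$ is the Riemann zeta function. *)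

From Stdlib Require Import Reals List Arith ClassicalEpsilon.
From Coquelicot Require Import Coquelicot.
Import ListNotations.
Open Scope R_scope.

(* n^{-s} = exp(-s ln n) for a positive integer n and complex s. *)
Definition cpow_neg (n : nat) (s : C) : C :=
  (Rpower (INR n) (- Re s) * cos (Im s * ln (INR n)),
   - (Rpower (INR n) (- Re s) * sin (Im s * ln (INR n)))).

Definition lsum {T : Type} (f : T -> C) (F : list T) : C :=
  fold_right Cplus (RtoC 0) (map f F).

(* Unconditional (unordered) summation of f over the set S:
   the net of finite partial sums over finite subsets of S converges to L. *)
Definition has_sum {T : Type} (f : T -> C) (S : T -> Prop) (L : C) : Prop :=
  forall eps : R, 0 < eps ->
    exists F0 : list T, (forall x, In x F0 -> S x) /\
      forall F : list T, NoDup F -> (forall x, In x F -> S x) ->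
        (forall x, In x F0 -> In x F) ->
        Cmod (Cminus (lsum f F) L) < eps.

(* The value of the sum (a chosen limit; meaningful when it exists). *)
Definition tsum {T : Type} (f : T -> C) (S : T -> Prop) : C :=
  epsilon (inhabits (RtoC 0)) (fun L => has_sum f S L).

Definition pos_int (n : nat) : Prop := (0 < n)%nat.

(* Riemann zeta function, for Re w > 1: sum_{n >= 1} n^{-w} *)
Definition zeta (w : C) : C := tsum (fun n => cpow_neg n w) pos_int.

Definition nat_prime (p : nat) : Prop :=
  (2 <= p)%nat /\ forall d, Nat.divide d p -> d = 1%nat \/ d = p.

Definition ord_is (p n e : nat) : Prop :=
  Nat.divide (p ^ e) n /\ ~ Nat.divide (p ^ (S e)) n.

Definition step_powerful (k l n : nat) : Prop :=
  (0 < n)%nat /\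
  forall p e, nat_prime p -> ord_is p n e ->
    (exists j, (j < l)%nat /\ e = (j * k)%nat) \/ (l * k <= e)%nat.

Definition F_kl (k l : nat) (s : C) : C :=
  tsum (fun n => cpow_neg n s) (step_powerful k l).

(* (l+1)-tuples (n_1,...,n_{l+1}) = [t_0; ...; t_l] of positive integers with
   n_{l+1} | n_l^k | n_{l-1}^k | ... | n_1^k *)
Definition tuple_set (k l : nat) (t : list nat) : Prop :=
  length t = S l /\
  (forall i, (i < S l)%nat -> (0 < nth i t 0)%nat) /\
  Nat.divide (nth l t 0%nat) (nth (l - 1) t 0%nat ^ k) /\
  (forall i, (S i < l)%nat -> Nat.divide (nth (S i) t 0%nat ^ k) (nth i t 0%nat ^ k)).

Definition tuple_term (k l : nat) (s : C) (t : list nat) : C :=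
  cpow_neg (fold_right Nat.mul 1%nat (map (fun n => n ^ k) (firstn l t)) * nth l t 0%nat)%nat s.

Definition zeta_prod (k l : nat) (s : C) : C :=
  fold_right Cmult (RtoC 1) (map (fun j => zeta (Cmult (RtoC (INR (j * k))) s)) (seq 2 l)).

(* Prime by prime, the chain n_(l+1) | n_l^k | ... | n_1^k says that the valuations satisfy
   x_1 >= ... >= x_l and x_(l+1) <= k x_l, and the valuation of n_1^k ... n_l^k n_(l+1) is
   k (x_1 + ... + x_l) + x_(l+1).  Passing to successive differences and then redistributing the
   three exponents of weights k, l k and 1 (by Euclidean division by k and by l) gives a
   weight-preserving bijection onto the vectors (e, y_1, ..., y_l) in which e is an admissible
   exponent of an l-step k-powerful number and y_j has weight (j+1) k.  These local bijections
   glue by unique factorisation into a bijection from the tuples onto the pairs (n, (d_j)_j) with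
   n l-step k-powerful, sending n_1^k ... n_l^k n_(l+1) to n d_1^(2k) ... d_l^((l+1)k).  The series
   thus splits as a product of absolutely convergent series, F_{k,l}(s) and the zeta(j k s). *)

From Stdlib Require Import Reals List Arith Lia Lra Permutation ClassicalEpsilon.
From Coquelicot Require Import Coquelicot.
From mathcomp Require ssreflect ssrfun ssrbool eqtype ssrnat div prime bigop.
Import ListNotations.
Open Scope R_scope.

Lemma classic_eq_dec {T : Type} (x y : T) : {x = y} + {x <> y}.
Proof. apply excluded_middle_informative. Qed.

Definition inb {T : Type} (W : list T) (x : T) : bool :=
  if excluded_middle_informative (In x W) then true else false.

Lemma inb_true {T} (W : list T) x : inb W x = true <-> In x W.
Proof. unfold inb. destruct excluded_middle_informative; split; intros; auto; discriminate. Qed.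

Lemma inb_false {T} (W : list T) x : inb W x = false <-> ~ In x W.
Proof. unfold inb. destruct excluded_middle_informative; split; intros; auto; easy. Qed.

Lemma In_filter_notinb {T} (W F : list T) x :
  In x (filter (fun y => negb (inb W y)) F) <-> In x F /\ ~ In x W.
Proof. rewrite filter_In, Bool.negb_true_iff, inb_false. tauto. Qed.

Definition rsum {T : Type} (h : T -> R) (F : list T) : R :=
  fold_right Rplus 0 (map h F).

Lemma lsum_cons {T} (f : T -> C) x F : lsum f (x :: F) = Cplus (f x) (lsum f F).
Proof. reflexivity. Qed.
Lemma rsum_cons {T} (f : T -> R) x F : rsum f (x :: F) = f x + rsum f F.
Proof. reflexivity. Qed.

Lemma lsum_app {T} (f : T -> C) F G : lsum f (F ++ G) = Cplus (lsum f F) (lsum f G).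
Proof.
  induction F as [|x F IH]; simpl.
  - unfold lsum; simpl. now rewrite Cplus_0_l.
  - rewrite !lsum_cons, IH. apply Cplus_assoc.
Qed.
Lemma rsum_app {T} (f : T -> R) F G : rsum f (F ++ G) = rsum f F + rsum f G.
Proof.
  induction F as [|x F IH]; simpl; [unfold rsum; simpl; ring|].
  rewrite !rsum_cons, IH. ring.
Qed.

Lemma lsum_perm {T} (f : T -> C) F G : Permutation F G -> lsum f F = lsum f G.
Proof.
  induction 1; rewrite ?lsum_cons; try congruence.
  rewrite !Cplus_assoc, (Cplus_comm (f y)). reflexivity.
Qed.
Lemma rsum_perm {T} (f : T -> R) F G : Permutation F G -> rsum f F = rsum f G.
Proof. induction 1; rewrite ?rsum_cons; try congruence. ring. Qed.

Lemma lsum_map {T U} (f : U -> C) (g : T -> U) F : lsum f (map g F) = lsum (fun x => f (g x)) F.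
Proof. unfold lsum. now rewrite map_map. Qed.
Lemma rsum_map {T U} (f : U -> R) (g : T -> U) F : rsum f (map g F) = rsum (fun x => f (g x)) F.
Proof. unfold rsum. now rewrite map_map. Qed.

Lemma lsum_ext_in {T} (f g : T -> C) F : (forall x, In x F -> f x = g x) -> lsum f F = lsum g F.
Proof. intro H. unfold lsum. now rewrite (map_ext_in f g F H). Qed.
Lemma rsum_ext_in {T} (f g : T -> R) F : (forall x, In x F -> f x = g x) -> rsum f F = rsum g F.
Proof. intro H. unfold rsum. now rewrite (map_ext_in f g F H). Qed.

Lemma lsum_RtoC {T} (h : T -> R) F : lsum (fun x => RtoC (h x)) F = RtoC (rsum h F).
Proof.
  induction F as [|x F IH]; [reflexivity|].
  rewrite lsum_cons, rsum_cons, IH, RtoC_plus. reflexivity.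
Qed.

Lemma Cmod_lsum {T} (f : T -> C) F : Cmod (lsum f F) <= rsum (fun x => Cmod (f x)) F.
Proof.
  induction F as [|x F IH].
  - unfold lsum, rsum; simpl. rewrite Cmod_0. lra.
  - rewrite lsum_cons, rsum_cons. eapply Rle_trans; [apply Cmod_triangle|lra].
Qed.

Lemma rsum_ge0 {T} (h : T -> R) F : (forall x, In x F -> 0 <= h x) -> 0 <= rsum h F.
Proof.
  induction F as [|x F IH]; intro H; [unfold rsum; simpl; lra|].
  rewrite rsum_cons. specialize (H x (or_introl eq_refl)) as Hx.
  assert (0 <= rsum h F) by (apply IH; intros; apply H; right; auto). lra.
Qed.

Lemma rsum_Cmod_ge0 {T} (f : T -> C) F : 0 <= rsum (fun x => Cmod (f x)) F.
Proof. apply rsum_ge0. intros; apply Cmod_ge_0. Qed.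

Lemma lsum_filter {T} (f : T -> C) (P : T -> bool) F :
  lsum f F = Cplus (lsum f (filter P F)) (lsum f (filter (fun x => negb (P x)) F)).
Proof.
  induction F as [|x F IH]; [unfold lsum; simpl; now rewrite Cplus_0_l|].
  simpl. destruct (P x); simpl; rewrite !lsum_cons, IH.
  - apply Cplus_assoc.
  - rewrite !Cplus_assoc, (Cplus_comm (f x)). reflexivity.
Qed.
Lemma rsum_filter {T} (f : T -> R) (P : T -> bool) F :
  rsum f F = rsum f (filter P F) + rsum f (filter (fun x => negb (P x)) F).
Proof.
  induction F as [|x F IH]; [unfold rsum; simpl; ring|].
  simpl. destruct (P x); simpl; rewrite !rsum_cons, IH; ring.
Qed.

Lemma Permutation_filter_inb {T} (F G : list T) : NoDup F -> NoDup G -> incl F G ->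
  Permutation (filter (inb F) G) F.
Proof.
  intros HF HG HI. apply NoDup_Permutation; auto using NoDup_filter.
  intro x. rewrite filter_In, inb_true. split; [tauto|auto].
Qed.

Lemma lsum_incl {T} (f : T -> C) (F G : list T) : NoDup F -> NoDup G -> incl F G ->
  lsum f G = Cplus (lsum f F) (lsum f (filter (fun x => negb (inb F x)) G)).
Proof.
  intros. rewrite (lsum_filter f (inb F) G).
  now rewrite (lsum_perm f _ _ (Permutation_filter_inb F G H H0 H1)).
Qed.
Lemma rsum_incl {T} (f : T -> R) (F G : list T) : NoDup F -> NoDup G -> incl F G ->
  rsum f G = rsum f F + rsum f (filter (fun x => negb (inb F x)) G).
Proof.
  intros. rewrite (rsum_filter f (inb F) G).
  now rewrite (rsum_perm f _ _ (Permutation_filter_inb F G H H0 H1)).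
Qed.

Lemma rsum_le_incl {T} (h : T -> R) (F G : list T) : NoDup F -> NoDup G -> incl F G ->
  (forall x, In x G -> 0 <= h x) -> rsum h F <= rsum h G.
Proof.
  intros. rewrite (rsum_incl h F G) by auto.
  enough (0 <= rsum h (filter (fun x => negb (inb F x)) G)) by lra.
  apply rsum_ge0. intros x Hx. apply filter_In in Hx. apply H2; tauto.
Qed.

Lemma lsum_scal {T} (f : T -> C) c F : lsum (fun x => Cmult c (f x)) F = Cmult c (lsum f F).
Proof.
  induction F as [|x F IH]; [unfold lsum; simpl; now rewrite Cmult_0_r|].
  rewrite !lsum_cons, IH, Cmult_plus_distr_l. reflexivity.
Qed.
Lemma rsum_scal {T} (f : T -> R) c F : rsum (fun x => c * f x) F = c * rsum f F.
Proof.
  induction F as [|x F IH]; [unfold rsum; simpl; ring|].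
  rewrite !rsum_cons, IH. ring.
Qed.

Lemma lsum_list_prod {T U} (f : T -> C) (g : U -> C) F G :
  lsum (fun p => Cmult (f (fst p)) (g (snd p))) (list_prod F G) = Cmult (lsum f F) (lsum g G).
Proof.
  induction F as [|x F IH]; [unfold lsum; simpl; now rewrite Cmult_0_l|].
  simpl. rewrite lsum_app, IH, lsum_map. simpl. rewrite lsum_scal, lsum_cons.
  rewrite Cmult_plus_distr_r. reflexivity.
Qed.
Lemma rsum_list_prod {T U} (f : T -> R) (g : U -> R) F G :
  rsum (fun p => f (fst p) * g (snd p)) (list_prod F G) = rsum f F * rsum g G.
Proof.
  induction F as [|x F IH]; [unfold rsum; simpl; ring|].
  simpl. rewrite rsum_app, IH, rsum_map. simpl. rewrite rsum_scal, rsum_cons. ring.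
Qed.

Lemma NoDup_list_prod {T U} (F : list T) (G : list U) : NoDup F -> NoDup G -> NoDup (list_prod F G).
Proof.
  intros HF HG. induction HF as [|x F Hx HF IH]; simpl; [constructor|].
  apply NoDup_app; auto.
  - apply NoDup_map_NoDup_ForallPairs; auto. intros a b _ _ E. now inversion E.
  - intros [a b] H1 H2. apply in_map_iff in H1 as [y [E _]]. inversion E; subst.
    apply in_prod_iff in H2. tauto.
Qed.

Lemma rsum_le_prod_projections {T U} (f : T -> R) (g : U -> R) (D : list (T * U)) :
  NoDup D -> (forall x, 0 <= f x) -> (forall y, 0 <= g y) ->
  rsum (fun p => f (fst p) * g (snd p)) D <=
  rsum f (nodup classic_eq_dec (map fst D)) * rsum g (nodup classic_eq_dec (map snd D)).
Proof.
  intros HD Hf Hg. rewrite <- rsum_list_prod.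
  apply rsum_le_incl; auto.
  - apply NoDup_list_prod; apply NoDup_nodup.
  - intros [x y] H. apply in_prod; apply nodup_In, in_map_iff; exists (x, y); auto.
  - intros; apply Rmult_le_pos; auto.
Qed.

Lemma has_sum_ext {T} (f g : T -> C) S L :
  (forall x, S x -> f x = g x) -> has_sum f S L -> has_sum g S L.
Proof.
  intros E H eps Heps. destruct (H eps Heps) as [F0 [H1 H2]]. exists F0; split; auto.
  intros F HF HS HI. rewrite <- (lsum_ext_in f g F); auto.
Qed.

Lemma has_sum_bij {T U} (f : T -> C) (g : U -> C) (S : T -> Prop) (S' : U -> Prop)
  (phi : T -> U) (psi : U -> T) L :
  (forall x, S x -> S' (phi x)) -> (forall y, S' y -> S (psi y)) ->
  (forall x, S x -> psi (phi x) = x) -> (forall y, S' y -> phi (psi y) = y) ->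
  (forall x, S x -> f x = g (phi x)) -> has_sum g S' L -> has_sum f S L.
Proof.
  intros H1 H2 H3 H4 E H eps Heps. destruct (H eps Heps) as [F0 [HF0 HF0']].
  exists (map psi F0). split.
  - intros x Hx. apply in_map_iff in Hx as [y [<- Hy]]. auto.
  - intros F HF HS HI.
    replace (lsum f F) with (lsum g (map phi F)).
    + apply HF0'.
      * apply NoDup_map_NoDup_ForallPairs; auto. intros a b Ha Hb Eab.
        rewrite <- (H3 a), <- (H3 b) by auto. congruence.
      * intros y Hy. apply in_map_iff in Hy as [x [<- Hx]]. auto.
      * intros y Hy. apply in_map_iff. exists (psi y). split; [apply H4; auto|].
        apply HI, in_map; auto.
    + rewrite lsum_map. apply lsum_ext_in. intros; symmetry; auto.
Qed.

Lemma has_sum_tsum {T} (f : T -> C) S : (exists L, has_sum f S L) -> has_sum f S (tsum f S).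
Proof. apply (epsilon_spec (inhabits (RtoC 0)) (fun L => has_sum f S L)). Qed.

Lemma has_sum_singleton {T} (f : T -> C) x0 : has_sum f (fun x => x = x0) (f x0).
Proof.
  intros eps Heps. exists [x0]. split; [intros x [<-|[]]; auto|].
  intros F HF HS HI.
  assert (F = [x0]) as ->.
  { destruct F as [|a [|b F]]; [destruct (HI x0 (or_introl eq_refl))| |].
    - now rewrite (HS a (or_introl eq_refl)).
    - rewrite (HS a (or_introl eq_refl)), (HS b (or_intror (or_introl eq_refl))) in HF.
      inversion HF; subst. exfalso. apply H1; left; auto. }
  unfold lsum; simpl. replace (Cminus (Cplus (f x0) (RtoC 0)) (f x0)) with (RtoC 0) by (unfold Cminus; ring).
  now rewrite Cmod_0.
Qed.

Lemma Cmod_RtoC_ge0 r : 0 <= r -> Cmod (RtoC r) = r.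
Proof. intro H. rewrite Cmod_R. now apply Rabs_pos_eq. Qed.

Definition absf {T} (f : T -> C) : T -> C := fun x => RtoC (Cmod (f x)).

Lemma absf_absf {T} (f : T -> C) x : absf (absf f) x = absf f x.
Proof. unfold absf. rewrite Cmod_RtoC_ge0; auto using Cmod_ge_0. Qed.

Definition abs_summable {T} (f : T -> C) (S : T -> Prop) : Prop := exists a, has_sum (absf f) S a.

Section AbsoluteSummability.
Variables (T : Type) (f : T -> C) (S : T -> Prop).
Hypothesis Habs : abs_summable f S.

Lemma has_sum_abs_tail eps : 0 < eps ->
  exists W, (forall x, In x W -> S x) /\
   forall G, NoDup G -> (forall x, In x G -> S x) -> (forall x, In x G -> ~ In x W) ->
     rsum (fun x => Cmod (f x)) G < eps.
Proof.
  intros Heps. destruct Habs as [a Ha]. destruct (Ha (eps/2)) as [W0 [HW0 HW0']]; [lra|].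
  set (W := nodup classic_eq_dec W0).
  assert (HW : forall x, In x W <-> In x W0) by (intro; apply nodup_In).
  exists W. split; [intros x Hx; apply HW0, HW; auto|].
  intros G HG HS HD.
  set (u := lsum (absf f) W). set (r := rsum (fun x => Cmod (f x)) G).
  assert (A1 : Cmod (Cminus u a) < eps/2).
  { apply HW0'; [apply NoDup_nodup| |]; intros x Hx; [apply HW0|]; apply HW; auto. }
  assert (A2 : Cmod (Cminus (Cplus u (RtoC r)) a) < eps/2).
  { unfold u, r. rewrite <- lsum_RtoC, <- lsum_app. apply HW0'.
    - apply NoDup_app; [apply NoDup_nodup|exact HG|]. intros x Hx Hy. apply (HD x Hy Hx).
    - intros x Hx. apply in_app_or in Hx as [Hx|Hx]; auto. apply HW0, HW; auto.
    - intros x Hx. apply in_or_app. left. apply HW; auto. }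
  assert (Cmod (RtoC r) <= Cmod (Cminus (Cplus u (RtoC r)) a) + Cmod (Cminus u a)).
  { replace (RtoC r) with (Cminus (Cminus (Cplus u (RtoC r)) a) (Cminus u a)) at 1 by (unfold Cminus; ring).
    eapply Rle_trans; [apply Cmod_triangle|]. rewrite Cmod_opp. lra. }
  rewrite Cmod_RtoC_ge0 in H by apply rsum_Cmod_ge0. lra.
Qed.

Lemma has_sum_abs_bounded : exists M, 0 <= M /\
   forall G, NoDup G -> (forall x, In x G -> S x) -> rsum (fun x => Cmod (f x)) G <= M.
Proof.
  destruct (has_sum_abs_tail 1) as [W [HW1 HW2]]; [lra|].
  exists (rsum (fun x => Cmod (f x)) (nodup classic_eq_dec W) + 1).
  split; [pose proof (rsum_Cmod_ge0 f (nodup classic_eq_dec W)); lra|].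
  intros G HG HS.
  rewrite (rsum_filter _ (inb W) G).
  assert (rsum (fun x => Cmod (f x)) (filter (inb W) G)
          <= rsum (fun x => Cmod (f x)) (nodup classic_eq_dec W)).
  { apply rsum_le_incl; auto using NoDup_filter, NoDup_nodup.
    - intros x Hx. apply filter_In in Hx as [_ Hx]. apply nodup_In, inb_true; auto.
    - intros; apply Cmod_ge_0. }
  assert (rsum (fun x => Cmod (f x)) (filter (fun x => negb (inb W x)) G) < 1).
  { apply HW2; auto using NoDup_filter.
    - intros x Hx. apply In_filter_notinb in Hx. apply HS; tauto.
    - intros x Hx. apply In_filter_notinb in Hx. tauto. }
  lra.
Qed.

End AbsoluteSummability.

Definition pair_in {T U} (A : T -> Prop) (B : U -> Prop) (p : T * U) : Prop := A (fst p) /\ B (snd p).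

Section OffRectangle.
Variables (T U : Type) (f : T -> R) (g : U -> R) (A : T -> Prop) (B : U -> Prop).
Variables (FA WA : list T) (FB WB : list U) (d MA MB : R).
Hypothesis (Hf : forall x, 0 <= f x) (Hg : forall y, 0 <= g y).
Hypothesis (HWA : incl WA FA) (HWB : incl WB FB).
Hypothesis tailA : forall G, NoDup G -> (forall x, In x G -> A x) ->
  (forall x, In x G -> ~ In x WA) -> rsum f G < d.
Hypothesis tailB : forall G, NoDup G -> (forall y, In y G -> B y) ->
  (forall y, In y G -> ~ In y WB) -> rsum g G < d.
Hypothesis boundA : forall G, NoDup G -> (forall x, In x G -> A x) -> rsum f G <= MA.
Hypothesis boundB : forall G, NoDup G -> (forall y, In y G -> B y) -> rsum g G <= MB.

Lemma rsum_off_rectangle (D : list (T * U)) : NoDup D ->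
  (forall p, In p D -> pair_in A B p /\ ~ (In (fst p) FA /\ In (snd p) FB)) ->
  rsum (fun p => f (fst p) * g (snd p)) D <= d * MB + MA * d.
Proof.
  intros HD HDin.
  set (P := fun p : T * U => inb FA (fst p)).
  rewrite (rsum_filter _ P D).
  set (D2 := filter P D). set (D1 := filter (fun p => negb (P p)) D).
  assert (HD1 : forall p, In p D1 -> In p D /\ ~ In (fst p) FA).
  { intros p Hp. apply filter_In in Hp as [Hp HP]. apply Bool.negb_true_iff, inb_false in HP. auto. }
  assert (HD2 : forall p, In p D2 -> In p D /\ ~ In (snd p) FB).
  { intros p Hp. apply filter_In in Hp as [Hp HP]. apply inb_true in HP.
    split; auto. intro. apply (HDin p Hp); auto. }
  assert (Hproj : forall (E : list (T * U)), (forall p, In p E -> In p D) ->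
            (forall x, In x (nodup classic_eq_dec (map fst E)) -> A x) /\
            (forall y, In y (nodup classic_eq_dec (map snd E)) -> B y)).
  { intros E HE. split; intros z Hz; apply nodup_In, in_map_iff in Hz as [p [<- Hp]];
      apply (HDin p (HE p Hp)). }
  assert (rsum (fun p => f (fst p) * g (snd p)) D1 <= d * MB).
  { eapply Rle_trans; [apply rsum_le_prod_projections; [apply NoDup_filter, HD|auto|auto]|].
    destruct (Hproj D1) as [PA PB]; [intros p Hp; apply HD1; auto|].
    apply Rmult_le_compat; auto using rsum_ge0, NoDup_nodup.
    - left. apply tailA; auto using NoDup_nodup.
      intros x Hx Hw. apply nodup_In, in_map_iff in Hx as [p [<- Hp]]. apply (HD1 p Hp), HWA, Hw. }
  assert (rsum (fun p => f (fst p) * g (snd p)) D2 <= MA * d).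
  { eapply Rle_trans; [apply rsum_le_prod_projections; [apply NoDup_filter, HD|auto|auto]|].
    destruct (Hproj D2) as [PA PB]; [intros p Hp; apply HD2; auto|].
    apply Rmult_le_compat; auto using rsum_ge0, NoDup_nodup.
    left. apply tailB; auto using NoDup_nodup.
    intros y Hy Hw. apply nodup_In, in_map_iff in Hy as [p [<- Hp]]. apply (HD2 p Hp), HWB, Hw. }
  lra.
Qed.

End OffRectangle.

Lemma has_sum_window {T} (f : T -> C) S a d : has_sum f S a -> abs_summable f S -> 0 < d ->
  exists F W, NoDup F /\ incl W F /\ (forall x, In x F -> S x) /\
    Cmod (Cminus (lsum f F) a) < d /\
    forall G, NoDup G -> (forall x, In x G -> S x) -> (forall x, In x G -> ~ In x W) ->
      rsum (fun x => Cmod (f x)) G < d.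
Proof.
  intros Hf Habs Hd.
  destruct (Hf d Hd) as [W1 [HW1 HW1']].
  destruct (has_sum_abs_tail _ f S Habs d Hd) as [W2 [HW2 HW2']].
  set (F := nodup classic_eq_dec (W1 ++ W2)).
  assert (HF : forall x, In x F <-> In x W1 \/ In x W2)
    by (intro; unfold F; rewrite nodup_In, in_app_iff; tauto).
  exists F, W2. split; [apply NoDup_nodup|split; [intros x Hx; apply HF; auto|split]].
  - intros x Hx. apply HF in Hx as [Hx|Hx]; auto.
  - split; auto. apply HW1'; [apply NoDup_nodup| |]; intros x Hx; [apply HF in Hx as [|]|apply HF]; auto.
Qed.

Lemma Cmod_mul_sub_le (x y a b : C) :
  Cmod (Cminus (Cmult x y) (Cmult a b)) <= Cmod (Cminus x a) * Cmod y + Cmod a * Cmod (Cminus y b).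
Proof.
  replace (Cminus (Cmult x y) (Cmult a b)) with
    (Cplus (Cmult (Cminus x a) y) (Cmult a (Cminus y b))) by (unfold Cminus; ring).
  eapply Rle_trans; [apply Cmod_triangle|]. rewrite !Cmod_mult. lra.
Qed.

Lemma has_sum_mul {T U} (f : T -> C) (g : U -> C) A B a b :
  has_sum f A a -> has_sum g B b -> abs_summable f A -> abs_summable g B ->
  has_sum (fun p => Cmult (f (fst p)) (g (snd p))) (pair_in A B) (Cmult a b).
Proof.
  intros Hf Hg Hfa Hga eps Heps.
  destruct (has_sum_abs_bounded _ f A Hfa) as [MA [HMA HMA']].
  destruct (has_sum_abs_bounded _ g B Hga) as [MB [HMB HMB']].
  set (K := 2 * MB + Cmod a + MA + 1).
  assert (HK : 0 < K) by (unfold K; pose proof (Cmod_ge_0 a); lra).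
  set (d := eps / K).
  assert (Hd : 0 < d) by (apply Rdiv_lt_0_compat; auto).
  destruct (has_sum_window f A a d Hf Hfa Hd) as [FA [WA [NA [IA [SA [EA TA]]]]]].
  destruct (has_sum_window g B b d Hg Hga Hd) as [FB [WB [NB [IB [SB [EB TB]]]]]].
  assert (N0 : NoDup (list_prod FA FB)) by (apply NoDup_list_prod; auto).
  exists (list_prod FA FB). split.
  { intros [x y] H. apply in_prod_iff in H as [Hx Hy]. split; auto. }
  intros F HF HS HI.
  set (h := fun p : T * U => Cmult (f (fst p)) (g (snd p))).
  rewrite (lsum_incl h (list_prod FA FB) F N0 HF HI).
  set (D := filter (fun p => negb (inb (list_prod FA FB) p)) F).
  unfold h at 1. rewrite lsum_list_prod.
  assert (BB : Cmod (lsum g FB) <= MB) by (eapply Rle_trans; [apply Cmod_lsum|]; auto).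
  assert (ED : Cmod (lsum h D) <= d * MB + MA * d).
  { eapply Rle_trans; [apply Cmod_lsum|].
    erewrite rsum_ext_in by (intros; unfold h; apply Cmod_mult).
    apply (rsum_off_rectangle _ _ (fun x => Cmod (f x)) (fun y => Cmod (g y)) A B FA WA FB WB);
      auto using Cmod_ge_0; [apply NoDup_filter, HF|].
    intros p Hp. apply In_filter_notinb in Hp as [Hp Hn]. split; auto.
    intros [H1 H2]. apply Hn. destruct p; apply in_prod; auto. }
  pose proof (Cmod_mul_sub_le (lsum f FA) (lsum g FB) a b).
  replace (Cminus (Cplus (Cmult (lsum f FA) (lsum g FB)) (lsum h D)) (Cmult a b)) with
    (Cplus (Cminus (Cmult (lsum f FA) (lsum g FB)) (Cmult a b)) (lsum h D)) by (unfold Cminus; ring).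
  eapply Rle_lt_trans; [apply Cmod_triangle|].
  assert (eps = d * K) by (unfold d; field; lra).
  pose proof (Cmod_ge_0 a). pose proof (Cmod_ge_0 (Cminus (lsum g FB) b)).
  pose proof (Cmod_ge_0 (Cminus (lsum f FA) a)). unfold K in *. nra.
Qed.

Lemma abs_summable_mul {T U} (f : T -> C) (g : U -> C) A B :
  abs_summable f A -> abs_summable g B ->
  abs_summable (fun p => Cmult (f (fst p)) (g (snd p))) (pair_in A B).
Proof.
  intros Hfa Hga. destruct Hfa as [a' Ha]. destruct Hga as [b' Hb].
  assert (Hfa : abs_summable (absf f) A)
    by (exists a'; eapply has_sum_ext; [|exact Ha]; intros; now rewrite absf_absf).
  assert (Hga : abs_summable (absf g) B)
    by (exists b'; eapply has_sum_ext; [|exact Hb]; intros; now rewrite absf_absf).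
  exists (Cmult a' b'). eapply has_sum_ext; [|apply (has_sum_mul _ _ A B a' b' Ha Hb Hfa Hga)].
  intros. unfold absf. now rewrite Cmod_mult, RtoC_mult.
Qed.

Lemma growing_bounded_tail (A : nat -> R) : Un_growing A -> has_ub A ->
  exists Ainf, (forall n, A n <= Ainf) /\
    forall eps, 0 < eps -> exists N, forall n, (N <= n)%nat -> Ainf - A n < eps.
Proof.
  intros Agrow Aub. destruct (growing_cv A Agrow Aub) as [Ainf HAinf].
  assert (Ale : forall n, A n <= Ainf).
  { intro n. apply Rnot_lt_le. intro Hlt. destruct (HAinf (A n - Ainf)) as [N HN]; [lra|].
    specialize (HN (max n N) ltac:(lia)). unfold Rdist in HN.
    assert (A n <= A (max n N)) by (apply tech9; auto; lia).
    rewrite Rabs_pos_eq in HN by lra. lra. }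
  exists Ainf. split; auto. intros eps Heps. destruct (HAinf eps Heps) as [N HN].
  exists N. intros n Hn. specialize (HN n Hn). unfold Rdist in HN.
  rewrite Rabs_minus_sym, Rabs_pos_eq in HN by (specialize (Ale n); lra). auto.
Qed.

Lemma Cmod_le_2max (z : C) : Cmod z <= 2 * Rmax (Rabs (fst z)) (Rabs (snd z)).
Proof.
  eapply Rle_trans; [apply Cmod_2Rmax|]. apply Rmult_le_compat_r.
  - eapply Rle_trans; [apply Rabs_pos|apply Rmax_l].
  - pose proof (sqrt_sqrt 2). pose proof (sqrt_pos 2). nra.
Qed.

Lemma C_cauchy_cv (a : nat -> C) :
  (forall eps, 0 < eps -> exists N, forall n m, (N <= n)%nat -> (N <= m)%nat ->
     Cmod (Cminus (a m) (a n)) < eps) ->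
  exists L, forall eps, 0 < eps -> exists N, forall n, (N <= n)%nat -> Cmod (Cminus (a n) L) < eps.
Proof.
  intro Ha.
  assert (Hcomp : forall pr : C -> R, (forall z, Rabs (pr z) <= Cmod z) ->
            (forall z w, pr (Cminus z w) = pr z - pr w) -> Cauchy_crit (fun n => pr (a n))).
  { intros pr Hpr Hlin eps Heps. destruct (Ha eps Heps) as [N HN]. exists N. intros n m Hn Hm.
    unfold Rdist. rewrite <- Hlin. eapply Rle_lt_trans; [apply Hpr|]. apply HN; auto. }
  destruct (Rcomplete.R_complete _ (Hcomp fst ltac:(apply (fun z => Rle_trans _ _ _ (Rmax_l _ _) (Rmax_Cmod z)))
              ltac:(intros; simpl; ring))) as [lr Hlr].
  destruct (Rcomplete.R_complete _ (Hcomp snd ltac:(apply (fun z => Rle_trans _ _ _ (Rmax_r _ _) (Rmax_Cmod z)))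
              ltac:(intros; simpl; ring))) as [li Hli].
  exists (lr, li). intros eps Heps.
  destruct (Hlr (eps/4)) as [N2 HN2]; [lra|]. destruct (Hli (eps/4)) as [N3 HN3]; [lra|].
  exists (max N2 N3). intros n Hn.
  specialize (HN2 n ltac:(lia)). specialize (HN3 n ltac:(lia)). unfold Rdist in *.
  eapply Rle_lt_trans; [apply Cmod_le_2max|]. simpl.
  assert (Rmax (Rabs (fst (a n) + - lr)) (Rabs (snd (a n) + - li)) < eps/2)
    by (apply Rmax_lub_lt; unfold Rminus in *; lra).
  lra.
Qed.

Definition sbool (S : nat -> Prop) (x : nat) : bool :=
  if excluded_middle_informative (S x) then true else false.

Definition seg (S : nat -> Prop) (a N : nat) : list nat := filter (sbool S) (seq a N).

Lemma seg_app S N m : seg S 0 (N + m) = seg S 0 N ++ seg S N m.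
Proof. unfold seg. now rewrite seq_app, filter_app. Qed.

Lemma NoDup_seg S a N : NoDup (seg S a N).
Proof. apply NoDup_filter, seq_NoDup. Qed.

Lemma In_seg S a N x : In x (seg S a N) <-> (a <= x < a + N)%nat /\ S x.
Proof.
  unfold seg, sbool. rewrite filter_In, in_seq.
  destruct excluded_middle_informative; split; intros; try tauto; easy.
Qed.

Lemma list_max_bound (F : list nat) N : exists M, (N <= M)%nat /\ forall x, In x F -> (x < M)%nat.
Proof.
  induction F as [|y F [M [HM HF]]]; [exists N; split; [lia|intros _ []]|].
  exists (max M (S y)). split; [lia|]. intros x [<-|Hx]; [lia|]. specialize (HF x Hx). lia.
Qed.

Section NatSums.
Variables (f : nat -> C) (Q : nat -> Prop) (M : R).
Hypothesis HM : forall G, NoDup G -> (forall x, In x G -> Q x) -> rsum (fun x => Cmod (f x)) G <= M.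

Let A N := rsum (fun x => Cmod (f x)) (seg Q 0 N).

Lemma A_add N m : A (N + m)%nat = A N + rsum (fun x => Cmod (f x)) (seg Q N m).
Proof. unfold A. now rewrite seg_app, rsum_app. Qed.

Lemma lsum_seg_cauchy Ainf : (forall n, A n <= Ainf) -> forall n m, (n <= m)%nat ->
  Cmod (Cminus (lsum f (seg Q 0 m)) (lsum f (seg Q 0 n))) <= Ainf - A n.
Proof.
  intros Ale n m Hnm. replace m with (n + (m - n))%nat by lia. rewrite seg_app, lsum_app.
  replace (Cminus (Cplus (lsum f (seg Q 0 n)) (lsum f (seg Q n (m - n)))) (lsum f (seg Q 0 n)))
    with (lsum f (seg Q n (m - n))) by (unfold Cminus; ring).
  eapply Rle_trans; [apply Cmod_lsum|]. specialize (Ale (n + (m - n))%nat). rewrite A_add in Ale. lra.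
Qed.

Lemma ex_has_sum_nat : exists L, has_sum f Q L.
Proof.
  assert (Agrow : Un_growing A).
  { intro n. replace (S n) with (n + 1)%nat by lia. rewrite A_add.
    pose proof (rsum_Cmod_ge0 f (seg Q n 1)). lra. }
  assert (Aub : has_ub A).
  { exists M. intros r [i ->]. apply HM; [apply NoDup_seg|]. intros x Hx; apply In_seg in Hx; tauto. }
  destruct (growing_bounded_tail A Agrow Aub) as [Ainf [Ale Atail]].
  set (a := fun N => lsum f (seg Q 0 N)).
  destruct (C_cauchy_cv a) as [L HL].
  { intros eps Heps. destruct (Atail (eps/2)) as [N HN]; [lra|]. exists N. intros n m Hn Hm.
    replace (Cminus (a m) (a n)) with (Cminus (Cminus (a m) (a N)) (Cminus (a n) (a N)))
      by (unfold Cminus; ring).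
    eapply Rle_lt_trans; [unfold Cminus at 1; apply Cmod_triangle|]. rewrite Cmod_opp.
    pose proof (lsum_seg_cauchy Ainf Ale N m Hm). pose proof (lsum_seg_cauchy Ainf Ale N n Hn).
    specialize (HN N (le_n N)). unfold a. lra. }
  exists L. intros eps Heps.
  destruct (Atail (eps/2)) as [N1 HN1]; [lra|]. destruct (HL (eps/2)) as [N2 HN2]; [lra|].
  set (N := max N1 N2).
  exists (seg Q 0 N). split; [intros x Hx; apply In_seg in Hx; tauto|].
  intros F HF HS HI.
  rewrite (lsum_incl f (seg Q 0 N) F (NoDup_seg _ _ _) HF HI).
  set (D := filter (fun x => negb (inb (seg Q 0 N) x)) F).
  destruct (list_max_bound F N) as [M' [HNM' HM']].
  assert (HD : rsum (fun x => Cmod (f x)) D <= rsum (fun x => Cmod (f x)) (seg Q N (M' - N))).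
  { apply rsum_le_incl; [apply NoDup_filter, HF|apply NoDup_seg| |intros; apply Cmod_ge_0].
    intros x Hx. apply In_filter_notinb in Hx as [Hx1 Hx2]. apply In_seg. split; [|auto].
    split; [|specialize (HM' x Hx1); lia]. apply Nat.nlt_ge. intro. apply Hx2, In_seg. split; [lia|auto]. }
  assert (rsum (fun x => Cmod (f x)) D < eps / 2).
  { pose proof (Ale (N + (M' - N))%nat) as HA. rewrite A_add in HA.
    specialize (HN1 N ltac:(unfold N; lia)). lra. }
  specialize (HN2 N ltac:(unfold N; lia)). fold (a N).
  replace (Cminus (Cplus (a N) (lsum f D)) L) with (Cplus (Cminus (a N) L) (lsum f D)) by (unfold Cminus; ring).
  eapply Rle_lt_trans; [apply Cmod_triangle|].
  pose proof (Cmod_lsum f D). lra.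
Qed.

End NatSums.

Lemma cpow_neg_mul m n s : (0 < m)%nat -> (0 < n)%nat ->
  cpow_neg (m * n) s = Cmult (cpow_neg m s) (cpow_neg n s).
Proof.
  intros Hm Hn. unfold cpow_neg. rewrite mult_INR.
  apply lt_0_INR in Hm, Hn.
  rewrite <- Rpower_mult_distr, ln_mult, Rmult_plus_distr_l, cos_plus, sin_plus by auto.
  unfold Cmult; simpl. f_equal; ring.
Qed.

Lemma cpow_neg_1 s : cpow_neg 1 s = RtoC 1.
Proof.
  unfold cpow_neg, Rpower. simpl INR. rewrite ln_1, !Rmult_0_r, cos_0, sin_0, exp_0.
  unfold RtoC. f_equal; ring.
Qed.

Lemma cpow_neg_pow d j s : (0 < d)%nat ->
  cpow_neg d (Cmult (RtoC (INR j)) s) = cpow_neg (d ^ j) s.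
Proof.
  intro Hd. apply lt_0_INR in Hd. unfold cpow_neg.
  rewrite pow_INR, ln_pow, <- Rpower_pow, Rpower_mult by auto.
  unfold Cmult, Re, Im, RtoC; simpl.
  replace (- (INR j * fst s - 0 * snd s)) with (INR j * - fst s) by ring.
  replace ((INR j * snd s + 0 * fst s) * ln (INR d)) with (snd s * (INR j * ln (INR d))) by ring.
  reflexivity.
Qed.

Lemma Cmod_cpow_neg n s : (0 < n)%nat -> Cmod (cpow_neg n s) = Rpower (INR n) (- Re s).
Proof.
  intro Hn. unfold cpow_neg, Cmod. cbn [fst snd].
  set (A := Rpower (INR n) (- Re s)). set (t := Im s * ln (INR n)).
  pose proof (sin2_cos2 t) as Hsc. unfold Rsqr in Hsc.
  replace ((A * cos t) ^ 2 + (- (A * sin t)) ^ 2) with (A ^ 2 * (sin t * sin t + cos t * cos t)) by ring.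
  rewrite Hsc, Rmult_1_r. apply sqrt_pow2. left; apply exp_pos.
Qed.

(* Telescoping comparison with the integral of x^(-sg); with y = (n-1)/n it follows from
   y^(1-sg) >= 1 + (1-sg)(y-1), i.e. from exp u >= 1 + u. *)
Lemma Rpower_telescope_bound (sg : R) (n : nat) : 1 < sg -> (2 <= n)%nat ->
  (sg - 1) * Rpower (INR n) (- sg) <= Rpower (INR n - 1) (1 - sg) - Rpower (INR n) (1 - sg).
Proof.
  intros Hs Hn. assert (Hn2 : 2 <= INR n) by (replace 2 with (INR 2) by (simpl; ring); apply le_INR; auto).
  set (x := INR n) in *. set (t := 1 - sg). set (y := (x - 1) / x).
  assert (Hy : 0 < y) by (apply Rdiv_lt_0_compat; lra).
  assert (Ey : x - 1 = x * y) by (unfold y; field; lra).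
  rewrite Ey, <- Rpower_mult_distr by lra.
  assert (Hly : ln y <= y - 1).
  { pose proof (exp_ineq1_le (ln y)) as H. rewrite exp_ln in H by auto. lra. }
  assert (Hyt : 1 + t * (y - 1) <= Rpower y t).
  { unfold Rpower. eapply Rle_trans; [|apply exp_ineq1_le]. unfold t. nra. }
  assert (Eym : y - 1 = - / x) by (unfold y; field; lra).
  assert (Exs : Rpower x (- sg) = Rpower x t * / x).
  { unfold t. replace (- sg) with ((1 - sg) + Ropp 1) by ring.
    now rewrite Rpower_plus, Rpower_Ropp, Rpower_1 by lra. }
  rewrite Exs. assert (Hxt : 0 < Rpower x t) by apply exp_pos.
  assert (Rpower x t * (1 + t * (y - 1)) <= Rpower x t * Rpower y t) by (apply Rmult_le_compat_l; lra).
  rewrite Eym in H. unfold t in *. nra.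
Qed.

Lemma rsum_Rpower_seq (sg : R) N : 1 < sg ->
  rsum (fun n => Rpower (INR n) (- sg)) (seq 1 (S N))
  <= 1 + (1 - Rpower (INR (S N)) (1 - sg)) / (sg - 1).
Proof.
  intro Hs. induction N.
  - unfold rsum, Rpower; simpl. rewrite ln_1, !Rmult_0_r, exp_0, Rminus_diag. lra.
  - rewrite seq_S, rsum_app.
    replace (rsum (fun n => Rpower (INR n) (-sg)) [(1 + S N)%nat]) with (Rpower (INR (S (S N))) (-sg))
      by (unfold rsum; simpl; ring).
    pose proof (Rpower_telescope_bound sg (S (S N)) Hs ltac:(lia)) as K.
    replace (INR (S (S N)) - 1) with (INR (S N)) in K by (rewrite (S_INR (S N)); ring).
    assert (Rpower (INR (S (S N))) (- sg)
            <= (Rpower (INR (S N)) (1 - sg) - Rpower (INR (S (S N))) (1 - sg)) / (sg - 1)).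
    { apply Rmult_le_reg_r with (sg - 1); [lra|].
      unfold Rdiv. rewrite Rmult_assoc, Rinv_l by lra. lra. }
    unfold Rdiv in *. rewrite Rmult_minus_distr_r in *. lra.
Qed.

Lemma rsum_Rpower_bound (sg : R) G : 1 < sg -> NoDup G -> (forall x, In x G -> (0 < x)%nat) ->
  rsum (fun n => Rpower (INR n) (- sg)) G <= 1 + 1 / (sg - 1).
Proof.
  intros Hs HG HP. destruct (list_max_bound G 0) as [N [_ HN]].
  eapply Rle_trans.
  - apply (rsum_le_incl _ G (seq 1 (S N))); auto using seq_NoDup.
    + intros x Hx. apply in_seq. specialize (HP x Hx). specialize (HN x Hx). lia.
    + intros; left; apply exp_pos.
  - eapply Rle_trans; [apply rsum_Rpower_seq; auto|].
    assert (0 < Rpower (INR (S N)) (1 - sg)) by apply exp_pos.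
    unfold Rdiv. apply Rplus_le_compat_l, Rmult_le_compat_r; [left; apply Rinv_0_lt_compat|]; lra.
Qed.

Lemma has_sum_Rpower_decay (f : nat -> C) S sg : 1 < sg -> (forall x, S x -> (0 < x)%nat) ->
  (forall x, S x -> Cmod (f x) = Rpower (INR x) (- sg)) ->
  has_sum f S (tsum f S) /\ abs_summable f S.
Proof.
  intros Hs HS Hf.
  assert (Hb : forall G, NoDup G -> (forall x, In x G -> S x) ->
            rsum (fun x => Cmod (f x)) G <= 1 + 1 / (sg - 1)).
  { intros G HG HG'. rewrite (rsum_ext_in _ (fun n => Rpower (INR n) (- sg))) by auto.
    apply rsum_Rpower_bound; auto. }
  split.
  - apply has_sum_tsum. eapply ex_has_sum_nat. exact Hb.
  - eapply ex_has_sum_nat. intros G HG HG'.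
    rewrite (rsum_ext_in _ (fun x => Cmod (f x))) by (intros; apply Cmod_RtoC_ge0, Cmod_ge_0).
    apply Hb; auto.
Qed.

Lemma has_sum_zeta (k j : nat) s : (1 <= j)%nat -> (1 <= k)%nat -> 1 < Re s ->
  has_sum (fun d => cpow_neg (d ^ (j * k)) s) pos_int (zeta (Cmult (RtoC (INR (j * k))) s)) /\
  abs_summable (fun d => cpow_neg (d ^ (j * k)) s) pos_int.
Proof.
  intros Hj Hk Hs.
  set (w := Cmult (RtoC (INR (j * k))) s).
  assert (Hw : Re w = INR (j * k) * Re s) by (unfold w, Cmult, Re, RtoC; simpl; ring).
  assert (Hjk : 1 <= INR (j * k)) by (replace 1 with (INR 1) by reflexivity; apply le_INR; nia).
  assert (Hw1 : 1 < Re w) by (rewrite Hw; nra).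
  destruct (has_sum_Rpower_decay (fun n => cpow_neg n w) pos_int (Re w) Hw1) as [H1 [a' H2]];
    [auto|intros x Hx; apply Cmod_cpow_neg; auto|].
  assert (E : forall x, pos_int x -> cpow_neg x w = cpow_neg (x ^ (j * k)) s)
    by (intros; apply cpow_neg_pow; auto).
  split.
  - eapply has_sum_ext; [|exact H1]. auto.
  - exists a'. eapply has_sum_ext; [|exact H2]. intros x Hx. unfold absf. now rewrite E.
Qed.

Definition pos_list (n : nat) (ds : list nat) : Prop :=
  length ds = n /\ forall d, In d ds -> (0 < d)%nat.

Fixpoint weighted_pow (k : nat) (js ds : list nat) : nat :=
  match js, ds with
  | j :: js', d :: ds' => d ^ (j * k) * weighted_pow k js' ds'
  | _, _ => 1%nat
  end.

Lemma weighted_pow_pos k js ds : (forall d, In d ds -> (0 < d)%nat) -> (0 < weighted_pow k js ds)%nat.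
Proof.
  revert ds; induction js as [|j js IH]; intros [|d ds] Hd; simpl; try lia.
  apply Nat.mul_pos_pos; [|apply IH; intros; apply Hd; right; auto].
  apply Nat.neq_0_lt_0, Nat.pow_nonzero. specialize (Hd d (or_introl eq_refl)). lia.
Qed.

Lemma pos_list_cons n d ds : pos_list (S n) (d :: ds) <-> pos_int d /\ pos_list n ds.
Proof.
  unfold pos_list, pos_int. simpl. split.
  - intros [H1 H2]. repeat split; auto; lia.
  - intros [H1 [H2 H3]]. split; [lia|]. intros x [<-|Hx]; auto.
Qed.

Lemma has_sum_pos_list_nil (f : list nat -> C) : has_sum f (pos_list 0) (f []).
Proof.
  apply (has_sum_bij f f _ (fun ds => ds = []) (fun ds => ds) (fun ds => ds)); auto.
  - intros [|] [H _]; [auto|discriminate].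
  - intros y ->. split; [reflexivity|intros _ []].
  - apply has_sum_singleton.
Qed.

Lemma has_sum_pos_list_cons (F : nat -> C) (G : list nat -> C) n a b :
  has_sum F pos_int a -> has_sum G (pos_list n) b ->
  abs_summable F pos_int -> abs_summable G (pos_list n) ->
  has_sum (fun ds => Cmult (F (hd 0%nat ds)) (G (tl ds))) (pos_list (S n)) (Cmult a b) /\
  abs_summable (fun ds => Cmult (F (hd 0%nat ds)) (G (tl ds))) (pos_list (S n)).
Proof.
  intros H1 H2 H3 H4.
  set (decons := fun ds : list nat => (hd 0%nat ds, tl ds)).
  set (recons := fun p : nat * list nat => fst p :: snd p).
  assert (Hs : forall ds, pos_list (S n) ds -> pair_in pos_int (pos_list n) (decons ds))
    by (intros [|d ds] Hd; [destruct Hd; discriminate|]; apply pos_list_cons in Hd; exact Hd).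
  assert (Hj : forall p, pair_in pos_int (pos_list n) p -> pos_list (S n) (recons p))
    by (intros [d ds] Hp; apply pos_list_cons, Hp).
  assert (Hsj : forall ds, pos_list (S n) ds -> recons (decons ds) = ds)
    by (intros [|d ds] Hd; [destruct Hd; discriminate|reflexivity]).
  assert (Hjs : forall p, pair_in pos_int (pos_list n) p -> decons (recons p) = p)
    by (intros [] _; reflexivity).
  split.
  - eapply has_sum_bij; [exact Hs|exact Hj|exact Hsj|exact Hjs| |apply has_sum_mul; eauto]. reflexivity.
  - destruct (abs_summable_mul F G _ _ H3 H4) as [c Hc]. exists c.
    eapply has_sum_bij; [exact Hs|exact Hj|exact Hsj|exact Hjs| |exact Hc]. reflexivity.
Qed.

Lemma has_sum_zeta_prod k s js : (1 <= k)%nat -> 1 < Re s -> (forall j, In j js -> (1 <= j)%nat) ->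
  has_sum (fun ds => cpow_neg (weighted_pow k js ds) s) (pos_list (length js))
    (fold_right Cmult (RtoC 1) (map (fun j => zeta (Cmult (RtoC (INR (j * k))) s)) js)) /\
  abs_summable (fun ds => cpow_neg (weighted_pow k js ds) s) (pos_list (length js)).
Proof.
  intros Hk Hs. induction js as [|j js IH]; intros Hj.
  - simpl. rewrite <- (cpow_neg_1 s). split; [apply has_sum_pos_list_nil|].
    exists (absf (fun ds => cpow_neg (weighted_pow k [] ds) s) []). apply has_sum_pos_list_nil.
  - destruct IH as [IH1 IH2]; [intros; apply Hj; right; auto|].
    destruct (has_sum_zeta k j s) as [Z1 Z2]; auto using in_eq.
    assert (E : forall ds, pos_list (S (length js)) ds ->
              cpow_neg (weighted_pow k (j :: js) ds) s =
              Cmult (cpow_neg (hd 0%nat ds ^ (j * k)) s) (cpow_neg (weighted_pow k js (tl ds)) s)).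
    { intros [|d ds] Hd; [destruct Hd; discriminate|]. apply pos_list_cons in Hd as [Hd1 [_ Hd2]]. simpl.
      apply cpow_neg_mul; [apply Nat.neq_0_lt_0, Nat.pow_nonzero; unfold pos_int in Hd1; lia|].
      apply weighted_pow_pos; auto. }
    destruct (has_sum_pos_list_cons _ _ _ _ _ Z1 IH1 Z2 IH2) as [P1 [c P2]].
    split.
    + simpl. eapply has_sum_ext; [|exact P1]. intros ds Hds. symmetry. apply E, Hds.
    + exists c. eapply has_sum_ext; [|exact P2]. intros ds Hds. unfold absf. now rewrite (E ds Hds).
Qed.

Open Scope nat_scope.

Module Logn.
Import ssreflect ssrfun ssrbool eqtype ssrnat div prime bigop.
Local Open Scope nat_scope.

Definition isprime (p : nat) : Prop := prime p = true.

Lemma pow_expn (a n : nat) : Nat.pow a n = expn a n.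
Proof. elim: n => [|n IH] //=. by rewrite expnS IH. Qed.

Lemma divide_dvdn (a b : nat) : Nat.divide a b <-> dvdn a b.
Proof.
  split.
  - move=> [c ->]. by rewrite dvdn_mull.
  - move/dvdnP=> [c ->]. by exists c.
Qed.

Lemma logn_mul p a b : (0 < a)%coq_nat -> (0 < b)%coq_nat ->
  logn p (Nat.mul a b) = Nat.add (logn p a) (logn p b).
Proof. move=> /ltP Ha /ltP Hb. exact: lognM. Qed.

Lemma logn_pow p a n : logn p (Nat.pow a n) = Nat.mul n (logn p a).
Proof. by rewrite pow_expn lognX. Qed.

Lemma eq_from_logn a b : (0 < a)%coq_nat -> (0 < b)%coq_nat ->
  (forall p, isprime p -> logn p a = logn p b) -> a = b.
Proof.
  move=> /ltP Ha /ltP Hb H. apply: eqn_from_log => // p.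
  case Pp: (prime p); first by apply: H.
  by rewrite /logn Pp.
Qed.

Lemma divide_logn a b : (0 < a)%coq_nat -> (0 < b)%coq_nat ->
  (Nat.divide a b <-> forall p, isprime p -> (logn p a <= logn p b)%coq_nat).
Proof.
  move=> /ltP Ha /ltP Hb. rewrite divide_dvdn. split.
  - move=> H p _. apply/leP. exact: dvdn_leq_log.
  - move=> H. apply/(dvdn_partP _ Ha) => p. rewrite mem_primes => /andP[Pp _].
    rewrite p_part pfactor_dvdn //. apply/leP. exact: H.
Qed.

Lemma ord_is_logn p n e : isprime p -> (0 < n)%coq_nat -> (ord_is p n e <-> e = logn p n).
Proof.
  move=> Pp /ltP Hn. rewrite /ord_is !divide_dvdn !pow_expn !pfactor_dvdn //.
  split.
  - move=> [H1 H2]. apply/eqP. rewrite eqn_leq H1 /= leqNgt. apply/negP => H3. by apply: H2.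
  - move=> ->. split => //. by rewrite ltnn.
Qed.

Lemma nat_prime_isprime p : nat_prime p <-> isprime p.
Proof.
  rewrite /nat_prime /isprime. split.
  - move=> [H1 H2]. apply/primeP. split; first by apply/leP.
    move=> d /divide_dvdn Hd. case: (H2 d Hd) => ->; by rewrite eqxx ?orbT.
  - move/primeP=> [H1 H2]. split; first by apply/leP.
    move=> d /divide_dvdn Hd. move: (H2 d Hd) => /orP [/eqP ->|/eqP ->]; auto.
Qed.

Lemma logn_small p n : (0 < n)%coq_nat -> (n < p)%coq_nat -> logn p n = 0.
Proof.
  move=> /ltP Hn /ltP Hp. apply/eqP. rewrite -leqn0 leqNgt logn_gt0 mem_primes.
  apply/negP => /and3P [_ _ Hd]. move: (dvdn_leq Hn Hd). by rewrite leqNgt Hp.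
Qed.

Definition prime_prod (E : nat -> nat) (B : nat) : nat :=
  \prod_(0 <= p < B | prime p) p ^ E p.

Lemma prime_prod_pos E B : (0 < prime_prod E B)%coq_nat.
Proof. apply/ltP. apply: prodn_cond_gt0 => p Pp. by rewrite expn_gt0 prime_gt0. Qed.

Lemma logn_prime_prod q E B : isprime q ->
  logn q (prime_prod E B) = if Nat.ltb q B then E q else 0.
Proof.
  move=> Pq. rewrite /prime_prod. elim: B => [|B IH]; first by rewrite big_geq // logn1.
  rewrite big_mkcond big_nat_recr //= -big_mkcond /=.
  have Hpos : 0 < \prod_(0 <= p < B | prime p) p ^ E p.
    apply: prodn_cond_gt0 => p Pp. by rewrite expn_gt0 prime_gt0.
  have Hlt : Nat.ltb q B.+1 = Nat.ltb q B || (q == B).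
    case: (eqVneq q B) => [->|NE]; first by rewrite Nat.ltb_irrefl; apply/Nat.ltb_lt; lia.
    have Hq : q <> B by apply/eqP.
    rewrite orbF. case: (Nat.ltb_spec q B) => H1; case: (Nat.ltb_spec q B.+1) => H2 //; lia.
  rewrite Hlt. case PB: (prime B).
  - rewrite lognM // ?expn_gt0 ?prime_gt0 // IH lognX logn_prime //.
    case: (eqVneq q B) => [->|NE] /=; first by rewrite Nat.ltb_irrefl muln1.
    by rewrite orbF muln0 addn0.
  - rewrite muln1 IH. case: (eqVneq q B) => [E'|NE]; last by rewrite orbF.
    by rewrite E' /isprime PB in Pq.
Qed.

End Logn.

Local Notation logn := prime.logn.
Local Notation isprime := Logn.isprime.

Fixpoint sumn (f : nat -> nat) (n : nat) : nat :=
  match n with 0 => 0 | S m => sumn f m + f m end.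

Lemma sumn_ext f g n : (forall i, i < n -> f i = g i) -> sumn f n = sumn g n.
Proof. induction n; simpl; intros H; auto. rewrite IHn, H; auto; intros; apply H; lia. Qed.

Lemma sumn_shift f n : sumn f (S n) = f 0 + sumn (fun i => f (S i)) n.
Proof. induction n; simpl in *; lia. Qed.

Lemma sumn_add f g n : sumn (fun i => f i + g i) n = sumn f n + sumn g n.
Proof. induction n; simpl; lia. Qed.

Lemma sumn_const c n : sumn (fun _ => c) n = n * c.
Proof. induction n; simpl; lia. Qed.

Lemma sumn_suffix_sums (z : nat -> nat) n :
  sumn (fun i => sumn (fun j => z (i + j)) (n - i)) n = sumn (fun i => (i + 1) * z i) n.
Proof.
  induction n; [reflexivity|]. cbn [sumn]. replace (S n - n) with 1 by lia.
  rewrite (sumn_ext _ (fun i => sumn (fun j => z (i + j)) (n - i) + z n)).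
  - rewrite sumn_add, IHn, sumn_const. simpl. rewrite !Nat.add_0_r. lia.
  - intros i Hi. replace (S n - i) with (S (n - i)) by lia. simpl. do 2 f_equal. lia.
Qed.

Lemma divmod_unique k c r : r < k -> (k * c + r) / k = c /\ (k * c + r) mod k = r.
Proof.
  intro H. split; symmetry; [apply (Nat.div_unique _ _ _ r)|apply (Nat.mod_unique _ _ c)]; lia.
Qed.

Lemma divmod_spec k b : 1 <= k -> b = k * (b / k) + b mod k /\ b mod k < k.
Proof. intro H. split; [apply Nat.div_mod_eq|apply Nat.mod_upper_bound; lia]. Qed.

(* Exponent vectors are functions [nat -> nat] of which only the indices 0..l matter: x holds the
   valuations of (n_1, ..., n_(l+1)), y those of (n, d_1, ..., d_l), and z the differences of x. *)
Section ExponentVectors.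
Variables k l : nat.
Hypothesis Hk : 1 <= k.
Hypothesis Hl : 1 <= l.

Definition agree (f g : nat -> nat) : Prop := forall i, i <= l -> f i = g i.

Definition chain_exps (x : nat -> nat) : Prop :=
  (forall i, i + 1 < l -> x (i + 1) <= x i) /\ x l <= k * x (l - 1).
Definition diff_exps (z : nat -> nat) : Prop := z l <= k * z (l - 1).
Definition step_exp (e : nat) : Prop := (exists j, j < l /\ e = j * k) \/ l * k <= e.

Definition chain_weight (x : nat -> nat) : nat := k * sumn x l + x l.
Definition diff_weight (z : nat -> nat) : nat := k * sumn (fun i => (i + 1) * z i) l + z l.
Definition split_weight (y : nat -> nat) : nat := y 0 + k * sumn (fun i => (i + 2) * y (i + 1)) l.

Definition diffs (x : nat -> nat) (i : nat) : nat := if i <? l - 1 then x i - x (S i) else x i.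
Definition suffix_sums (z : nat -> nat) (i : nat) : nat :=
  if i <? l then sumn (fun j => z (i + j)) (l - i) else z i.

Lemma suffix_sums_step z i : i < l ->
  suffix_sums z i = z i + (if S i <? l then suffix_sums z (S i) else 0).
Proof.
  intro H. unfold suffix_sums. destruct (Nat.ltb_spec i l); [|lia].
  destruct (Nat.ltb_spec (S i) l).
  - replace (l - i) with (S (l - S i)) by lia. rewrite sumn_shift, !Nat.add_0_r.
    f_equal. apply sumn_ext. intros. f_equal. lia.
  - replace (l - i) with 1 by lia. simpl. now rewrite !Nat.add_0_r.
Qed.

Lemma suffix_sums_diffs x : chain_exps x -> agree (suffix_sums (diffs x)) x.
Proof.
  intros [HA HB] i Hi.
  enough (forall d, d <= l -> suffix_sums (diffs x) (l - d) = x (l - d)) as H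
    by (replace i with (l - (l - i)) by lia; apply H; lia).
  induction d; intro Hd.
  - unfold suffix_sums, diffs. rewrite Nat.sub_0_r, Nat.ltb_irrefl.
    destruct (Nat.ltb_spec l (l - 1)); lia.
  - rewrite suffix_sums_step by lia. destruct (Nat.ltb_spec (S (l - S d)) l).
    2: unfold diffs; destruct (Nat.ltb_spec (l - S d) (l - 1)); lia.
    replace (S (l - S d)) with (l - d) by lia. rewrite IHd by lia.
    unfold diffs. destruct (Nat.ltb_spec (l - S d) (l - 1)); [|lia].
    replace (S (l - S d)) with (l - d) by lia.
    specialize (HA (l - S d) ltac:(lia)). replace (l - S d + 1) with (l - d) in HA by lia. lia.
Qed.

Lemma diffs_suffix_sums z : agree (diffs (suffix_sums z)) z.
Proof.
  intros i Hi. unfold diffs. destruct (Nat.ltb_spec i (l - 1)).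
  - rewrite (suffix_sums_step z i) by lia. destruct (Nat.ltb_spec (S i) l); lia.
  - unfold suffix_sums. destruct (Nat.ltb_spec i l); [|reflexivity].
    replace (l - i) with 1 by lia. simpl. now rewrite !Nat.add_0_r.
Qed.

Lemma diff_exps_diffs x : chain_exps x -> diff_exps (diffs x).
Proof.
  intros [_ HB]. unfold diff_exps, diffs.
  now rewrite (proj2 (Nat.ltb_ge l (l - 1))), Nat.ltb_irrefl by lia.
Qed.

Lemma chain_exps_suffix_sums z : diff_exps z -> chain_exps (suffix_sums z).
Proof.
  unfold diff_exps. intro H. split.
  - intros i Hi. rewrite (suffix_sums_step z i) by lia. destruct (Nat.ltb_spec (S i) l); [|lia].
    replace (i + 1) with (S i) by lia. lia.
  - unfold suffix_sums. rewrite Nat.ltb_irrefl, (proj2 (Nat.ltb_lt (l - 1) l)) by lia.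
    replace (l - (l - 1)) with 1 by lia. simpl. rewrite !Nat.add_0_r. lia.
Qed.

Lemma chain_weight_suffix_sums z : chain_weight (suffix_sums z) = diff_weight z.
Proof.
  unfold chain_weight, diff_weight. f_equal; [f_equal|].
  - rewrite <- sumn_suffix_sums. apply sumn_ext. intros i Hi. unfold suffix_sums.
    destruct (Nat.ltb_spec i l); [reflexivity|lia].
  - unfold suffix_sums. now rewrite Nat.ltb_irrefl.
Qed.

Lemma chain_weight_agree x y : agree x y -> chain_weight x = chain_weight y.
Proof.
  intro H. unfold chain_weight. rewrite (sumn_ext x y) by (intros; apply H; lia).
  now rewrite (H l) by lia.
Qed.

Lemma diff_weight_diffs x : chain_exps x -> diff_weight (diffs x) = chain_weight x.
Proof.
  intro H. rewrite <- chain_weight_suffix_sums. apply chain_weight_agree, suffix_sums_diffs, H.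
Qed.

(* The map [split_exps] moves the three coordinates c0 = z 0, a = z (l-1), b = z l, of weights k, l k
   and 1, to the coordinates 0, l-1 and l, of weights 1, l k and (l+1) k; all other coordinates
   are left in place.  When b = k a, b and a are absorbed by y l = a and c0 is divided by l;
   when b < k a, write b = k q + r and put y l = q, y (l-1) = a - 1 - q, and y 0 = l k + k c0 + r.
   For l = 1 the coordinates 0 and l - 1 coincide. *)
Definition split_e (c0 a b : nat) : nat :=
  if b =? k * a then (if l =? 1 then 0 else k * (c0 mod l))
  else (if l =? 1 then k + k * (a - 1 - b / k) + b mod k else l * k + k * c0 + b mod k).
Definition split_v (c0 a b : nat) : nat := if b =? k * a then c0 / l else a - 1 - b / k.
Definition split_w (a b : nat) : nat := if b =? k * a then a else b / k.

Definition merge_c (e v : nat) : nat := if e <? l * k then e / k + l * v else (e - l * k) / k.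
Definition merge_a (e v w : nat) : nat :=
  if e <? l * k then w else (if l =? 1 then 1 + (e - k) / k + w else 1 + v + w).
Definition merge_b (e w : nat) : nat := if e <? l * k then k * w else k * w + (e - l * k) mod k.

Definition split_exps (z : nat -> nat) (i : nat) : nat :=
  if i =? 0 then split_e (z 0) (z (l - 1)) (z l)
  else if i =? l then split_w (z (l - 1)) (z l)
  else if i =? l - 1 then split_v (z 0) (z (l - 1)) (z l)
  else z i.
Definition merge_exps (y : nat -> nat) (i : nat) : nat :=
  if i =? l then merge_b (y 0) (y l)
  else if i =? l - 1 then merge_a (y 0) (y (l - 1)) (y l)
  else if i =? 0 then merge_c (y 0) (y (l - 1))
  else y i.

Lemma split_0 z : split_exps z 0 = split_e (z 0) (z (l - 1)) (z l).
Proof. reflexivity. Qed.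
Lemma split_l z : split_exps z l = split_w (z (l - 1)) (z l).
Proof. unfold split_exps. now rewrite (proj2 (Nat.eqb_neq l 0)), Nat.eqb_refl by lia. Qed.
Lemma split_pred_l z : 2 <= l -> split_exps z (l - 1) = split_v (z 0) (z (l - 1)) (z l).
Proof.
  intro H. unfold split_exps.
  now rewrite (proj2 (Nat.eqb_neq (l - 1) 0)), (proj2 (Nat.eqb_neq (l - 1) l)), Nat.eqb_refl by lia.
Qed.
Lemma split_other z i : i <> 0 -> i <> l -> i <> l - 1 -> split_exps z i = z i.
Proof. intros. unfold split_exps. now rewrite !(proj2 (Nat.eqb_neq _ _)) by auto. Qed.

Lemma merge_l y : merge_exps y l = merge_b (y 0) (y l).
Proof. unfold merge_exps. now rewrite Nat.eqb_refl. Qed.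
Lemma merge_pred_l y : merge_exps y (l - 1) = merge_a (y 0) (y (l - 1)) (y l).
Proof. unfold merge_exps. now rewrite (proj2 (Nat.eqb_neq (l - 1) l)), Nat.eqb_refl by lia. Qed.
Lemma merge_0 y : 2 <= l -> merge_exps y 0 = merge_c (y 0) (y (l - 1)).
Proof. intro H. unfold merge_exps. now rewrite !(proj2 (Nat.eqb_neq _ _)) by lia. Qed.
Lemma merge_other y i : i <> 0 -> i <> l -> i <> l - 1 -> merge_exps y i = y i.
Proof. intros. unfold merge_exps. now rewrite !(proj2 (Nat.eqb_neq _ _)) by auto. Qed.

Lemma merge_split_one a b v : l = 1 -> b <= k * a ->
  merge_a (split_e a a b) v (split_w a b) = a /\ merge_b (split_e a a b) (split_w a b) = b.
Proof.
  intros L1 Hb. unfold merge_a, merge_b, split_e, split_w. rewrite L1, Nat.eqb_refl, Nat.mul_1_l.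
  pose proof (divmod_spec k b Hk) as Hd.
  destruct (Nat.eqb_spec b (k * a)).
  - rewrite (proj2 (Nat.ltb_lt 0 k)) by lia. lia.
  - rewrite (proj2 (Nat.ltb_ge _ k)) by nia.
    assert (b / k < a) by nia. set (q := a - 1 - b / k).
    replace (k + k * q + b mod k - k) with (k * q + b mod k) by lia.
    destruct (divmod_unique k q (b mod k)) as [-> ->]; [lia|]. unfold q. lia.
Qed.

Lemma merge_split_many c0 a b : 2 <= l -> b <= k * a ->
  let e := split_e c0 a b in let v := split_v c0 a b in let w := split_w a b in
  merge_c e v = c0 /\ merge_a e v w = a /\ merge_b e w = b.
Proof.
  intros L2 Hb. cbv zeta. unfold merge_c, merge_a, merge_b, split_e, split_v, split_w.
  rewrite (proj2 (Nat.eqb_neq l 1)) by lia.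
  pose proof (divmod_spec k b Hk) as Hd. pose proof (divmod_spec l c0 Hl) as Hc.
  destruct (Nat.eqb_spec b (k * a)).
  - rewrite (proj2 (Nat.ltb_lt _ (l * k))) by nia.
    rewrite Nat.mul_comm, Nat.div_mul by lia. lia.
  - rewrite (proj2 (Nat.ltb_ge _ (l * k))) by lia.
    replace (l * k + k * c0 + b mod k - l * k) with (k * c0 + b mod k) by lia.
    destruct (divmod_unique k c0 (b mod k)) as [-> ->]; [lia|].
    assert (b / k < a) by nia. lia.
Qed.

Lemma split_merge_one e w : l = 1 -> step_exp e ->
  let a := merge_a e e w in let b := merge_b e w in
  split_e a a b = e /\ split_w a b = w.
Proof.
  intros L1 He. cbv zeta. unfold step_exp in He. rewrite L1 in He.
  unfold merge_a, merge_b, split_e, split_w. rewrite L1, Nat.eqb_refl, !Nat.mul_1_l.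
  pose proof (divmod_spec k (e - k) Hk) as Hd.
  destruct (Nat.ltb_spec e k).
  - destruct He as [[j [Hj Ej]]|]; [|lia]. replace j with 0 in Ej by lia. rewrite Nat.eqb_refl. lia.
  - destruct (Nat.eqb_spec (k * w + (e - k) mod k) (k * (1 + (e - k) / k + w))); [nia|].
    destruct (divmod_unique k w ((e - k) mod k)) as [-> ->]; [lia|].
    replace (1 + (e - k) / k + w - 1 - w) with ((e - k) / k) by lia. lia.
Qed.

Lemma split_merge_many e v w : 2 <= l -> step_exp e ->
  let c0 := merge_c e v in let a := merge_a e v w in let b := merge_b e w in
  split_e c0 a b = e /\ split_v c0 a b = v /\ split_w a b = w.
Proof.
  intros L2 He. cbv zeta. unfold step_exp in He.
  unfold merge_c, merge_a, merge_b, split_e, split_v, split_w.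
  rewrite (proj2 (Nat.eqb_neq l 1)) by lia.
  pose proof (divmod_spec k (e - l * k) Hk) as Hd.
  destruct (Nat.ltb_spec e (l * k)).
  - destruct He as [[j [Hj Ej]]|]; [|lia].
    rewrite Nat.eqb_refl, Ej, Nat.div_mul by lia.
    replace (j + l * v) with (l * v + j) by lia.
    destruct (divmod_unique l v j) as [-> ->]; lia.
  - destruct (Nat.eqb_spec (k * w + (e - l * k) mod k) (k * (1 + v + w))); [nia|].
    destruct (divmod_unique k w ((e - l * k) mod k)) as [-> ->]; [lia|]. lia.
Qed.

Lemma split_weight_one a b : l = 1 -> b <= k * a ->
  split_e a a b + 2 * k * split_w a b = k * a + b.
Proof.
  intros L1 Hb. unfold split_e, split_w. rewrite L1, Nat.eqb_refl.
  pose proof (divmod_spec k b Hk) as Hd.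
  destruct (Nat.eqb_spec b (k * a)); [lia|]. assert (b / k < a) by nia. nia.
Qed.

Lemma split_weight_many c0 a b : 2 <= l -> b <= k * a ->
  split_e c0 a b + k * (l * split_v c0 a b + (l + 1) * split_w a b) = k * c0 + k * (l * a) + b.
Proof.
  intros L2 Hb. unfold split_e, split_v, split_w. rewrite (proj2 (Nat.eqb_neq l 1)) by lia.
  pose proof (divmod_spec k b Hk) as Hd. pose proof (divmod_spec l c0 Hl) as Hc.
  destruct (Nat.eqb_spec b (k * a)); [nia|]. assert (b / k < a) by nia. nia.
Qed.

Lemma step_exp_split z : diff_exps z -> step_exp (split_exps z 0).
Proof.
  unfold diff_exps, step_exp. intro HM. rewrite split_0. unfold split_e.
  destruct (Nat.eqb_spec (z l) (k * z (l - 1))), (Nat.eqb_spec l 1).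
  - left. exists 0. lia.
  - left. exists (z 0 mod l). split; [apply Nat.mod_upper_bound|]; lia.
  - right. nia.
  - right. nia.
Qed.

Lemma diff_exps_merge y : diff_exps (merge_exps y).
Proof.
  unfold diff_exps. rewrite merge_l, merge_pred_l. unfold merge_a, merge_b.
  destruct (Nat.ltb_spec (y 0) (l * k)); [lia|].
  pose proof (divmod_spec k (y 0 - l * k) Hk).
  destruct (Nat.eqb_spec l 1); nia.
Qed.

Lemma merge_split z : diff_exps z -> agree (merge_exps (split_exps z)) z.
Proof.
  intros HM i Hi. unfold diff_exps in HM.
  destruct (Nat.eq_dec l 1) as [L1|L1].
  - assert (E0 : l - 1 = 0) by lia. rewrite E0 in HM.
    destruct (merge_split_one (z 0) (z l) (split_e (z 0) (z 0) (z l)) L1 HM) as [EA EB].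
    destruct (Nat.eq_dec i l) as [->|N1].
    + rewrite merge_l, split_0, split_l, E0. exact EB.
    + replace i with (l - 1) by lia. rewrite merge_pred_l, split_l, E0, split_0, E0. exact EA.
  - destruct (merge_split_many (z 0) (z (l - 1)) (z l) ltac:(lia) HM) as [EC [EA EB]].
    destruct (Nat.eq_dec i l) as [->|N1]; [rewrite merge_l, split_0, split_l; exact EB|].
    destruct (Nat.eq_dec i (l - 1)) as [->|N2];
      [rewrite merge_pred_l, split_0, split_l, split_pred_l by lia; exact EA|].
    destruct (Nat.eq_dec i 0) as [->|N3];
      [rewrite merge_0, split_0, split_pred_l by lia; exact EC|].
    rewrite merge_other, split_other; auto.
Qed.

Lemma split_merge y : step_exp (y 0) -> agree (split_exps (merge_exps y)) y.
Proof.
  intros HR i Hi.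
  destruct (Nat.eq_dec l 1) as [L1|L1].
  - assert (E0 : l - 1 = 0) by lia.
    destruct (split_merge_one (y 0) (y l) L1 HR) as [EE EW].
    assert (EM : merge_exps y 0 = merge_a (y 0) (y 0) (y l)) by (rewrite <- E0, merge_pred_l, E0; reflexivity).
    destruct (Nat.eq_dec i l) as [->|N1].
    + rewrite split_l, E0, EM, merge_l. exact EW.
    + replace i with 0 by lia. rewrite split_0, E0, EM, merge_l. exact EE.
  - destruct (split_merge_many (y 0) (y (l - 1)) (y l) ltac:(lia) HR) as [EE [EV EW]].
    destruct (Nat.eq_dec i 0) as [->|N1];
      [rewrite split_0, merge_0, merge_pred_l, merge_l by lia; exact EE|].
    destruct (Nat.eq_dec i l) as [->|N2]; [rewrite split_l, merge_pred_l, merge_l; exact EW|].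
    destruct (Nat.eq_dec i (l - 1)) as [->|N3];
      [rewrite split_pred_l, merge_0, merge_pred_l, merge_l by lia; exact EV|].
    rewrite split_other, merge_other; auto.
Qed.

Lemma split_weight_split z : diff_exps z -> split_weight (split_exps z) = diff_weight z.
Proof.
  unfold diff_exps, split_weight, diff_weight. intro HM.
  destruct (Nat.eq_dec l 1) as [L1|L1].
  - assert (E0 : l - 1 = 0) by lia. rewrite E0 in HM.
    pose proof (split_weight_one (z 0) (z l) L1 HM) as W.
    replace (sumn (fun i => (i + 2) * split_exps z (i + 1)) l) with (2 * split_exps z l)
      by (rewrite L1; simpl; lia).
    replace (sumn (fun i => (i + 1) * z i) l) with (z 0) by (rewrite L1; simpl; lia).
    rewrite split_0, split_l, E0. lia.
  - set (m := l - 2).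
    pose proof (split_weight_many (z 0) (z (l - 1)) (z l) ltac:(lia) HM) as W.
    assert (S1 : sumn (fun i => (i + 2) * split_exps z (i + 1)) l =
       sumn (fun i => (S i + 1) * z (S i)) m + l * split_exps z (l - 1) + (l + 1) * split_exps z l).
    { replace l with (S (S m)) at 1 by lia. cbn [sumn]. f_equal; [f_equal|].
      - apply sumn_ext. intros i Hi. rewrite split_other by lia. f_equal; [lia|f_equal; lia].
      - replace (m + 1) with (l - 1) by lia. f_equal. lia.
      - replace (S m + 1) with l by lia. f_equal. lia. }
    assert (S2 : sumn (fun i => (i + 1) * z i) l =
       z 0 + sumn (fun i => (S i + 1) * z (S i)) m + l * z (l - 1)).
    { replace l with (S (S m)) at 1 by lia. rewrite sumn_shift. cbn [sumn].
      replace (S m) with (l - 1) by lia. lia. }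
    rewrite S1, S2, split_0, split_pred_l, split_l by lia. nia.
Qed.

Lemma agree_sym f g : agree f g -> agree g f.
Proof. intros H i Hi. symmetry. auto. Qed.
Lemma agree_trans f g h : agree f g -> agree g h -> agree f h.
Proof. intros H1 H2 i Hi. rewrite H1, H2; auto. Qed.

Lemma diffs_agree x y : agree x y -> agree (diffs x) (diffs y).
Proof. intros H i Hi. unfold diffs. destruct (Nat.ltb_spec i (l - 1)); rewrite ?H by lia; auto. Qed.
Lemma suffix_sums_agree x y : agree x y -> agree (suffix_sums x) (suffix_sums y).
Proof.
  intros H i Hi. unfold suffix_sums. destruct (Nat.ltb_spec i l); auto.
  apply sumn_ext. intros; apply H; lia.
Qed.
Lemma split_agree x y : agree x y -> agree (split_exps x) (split_exps y).
Proof. intros H i Hi. unfold split_exps. rewrite !(H 0), !(H l), !(H (l - 1)), H by lia. reflexivity. Qed.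
Lemma merge_agree x y : agree x y -> agree (merge_exps x) (merge_exps y).
Proof. intros H i Hi. unfold merge_exps. rewrite !(H 0), !(H l), !(H (l - 1)), H by lia. reflexivity. Qed.
Lemma split_weight_agree x y : agree x y -> split_weight x = split_weight y.
Proof.
  intro H. unfold split_weight. rewrite (H 0) by lia.
  now rewrite (sumn_ext _ (fun i => (i + 2) * y (i + 1))) by (intros; rewrite H by lia; reflexivity).
Qed.
Lemma chain_exps_agree x y : agree x y -> chain_exps x -> chain_exps y.
Proof. intros H [H1 H2]. split; [intros i Hi|]; rewrite <- !H by lia; auto. Qed.

Definition local_phi (x : nat -> nat) : nat -> nat := split_exps (diffs x).
Definition local_psi (y : nat -> nat) : nat -> nat := suffix_sums (merge_exps y).

Lemma local_phi_spec x : chain_exps x ->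
  step_exp (local_phi x 0) /\ agree (local_psi (local_phi x)) x /\
  split_weight (local_phi x) = chain_weight x.
Proof.
  intro H. pose proof (diff_exps_diffs x H) as HM. split; [|split].
  - apply step_exp_split, HM.
  - eapply agree_trans; [apply suffix_sums_agree, merge_split, HM|]. apply suffix_sums_diffs, H.
  - unfold local_phi. rewrite split_weight_split by exact HM. apply diff_weight_diffs, H.
Qed.

Lemma local_psi_spec y : step_exp (y 0) ->
  chain_exps (local_psi y) /\ agree (local_phi (local_psi y)) y.
Proof.
  intro H. split.
  - apply chain_exps_suffix_sums, diff_exps_merge.
  - eapply agree_trans; [apply split_agree, diffs_suffix_sums|]. apply split_merge, H.
Qed.

Lemma local_phi_agree x y : agree x y -> agree (local_phi x) (local_phi y).
Proof. intro H. apply split_agree, diffs_agree, H. Qed.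
Lemma local_psi_agree x y : agree x y -> agree (local_psi x) (local_psi y).
Proof. intro H. apply suffix_sums_agree, merge_agree, H. Qed.

Lemma local_phi_zero : agree (local_phi (fun _ => 0)) (fun _ => 0).
Proof.
  intros i Hi. unfold local_phi.
  assert (Hz : agree (diffs (fun _ => 0)) (fun _ => 0))
    by (intros j _; unfold diffs; now destruct (j <? l - 1)).
  rewrite (split_agree _ _ Hz i Hi).
  unfold split_exps, split_e, split_v, split_w.
  rewrite Nat.mul_0_r, Nat.eqb_refl, Nat.Div0.mod_0_l, Nat.Div0.div_0_l, Nat.mul_0_r.
  now destruct (i =? 0), (l =? 1), (i =? l), (i =? l - 1).
Qed.

Lemma local_psi_zero : agree (local_psi (fun _ => 0)) (fun _ => 0).
Proof.
  intros i Hi. unfold local_psi.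
  assert (Hz : agree (merge_exps (fun _ => 0)) (fun _ => 0)).
  { intros j _. unfold merge_exps, merge_a, merge_b, merge_c.
    rewrite (proj2 (Nat.ltb_lt 0 (l * k))), Nat.Div0.div_0_l, !Nat.mul_0_r by nia.
    now destruct (j =? l), (j =? l - 1), (j =? 0). }
  rewrite (suffix_sums_agree _ _ Hz i Hi).
  unfold suffix_sums. destruct (i <? l); auto. rewrite sumn_const. lia.
Qed.

End ExponentVectors.

Definition loc (p : nat) (t : list nat) : nat -> nat := fun i => logn p (nth i t 0).

Definition allpos (t : list nat) : Prop := forall x, In x t -> 0 < x.

Definition prodl (t : list nat) : nat := fold_right Nat.mul 1 t.

Lemma prodl_pos t : allpos t -> 0 < prodl t.
Proof.
  induction t as [|a t IH]; simpl; intro H; [lia|].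
  apply Nat.mul_pos_pos; [apply H; left; auto|apply IH; intros x Hx; apply H; right; auto].
Qed.

Lemma In_le_prodl t x : allpos t -> In x t -> x <= prodl t.
Proof.
  induction t as [|a t IH]; simpl; intros H Hx; [contradiction|].
  assert (0 < a) by (apply H; left; auto).
  assert (Ht : allpos t) by (intros y Hy; apply H; right; auto).
  pose proof (prodl_pos t Ht).
  destruct Hx as [->|Hx]; [nia|]. specialize (IH Ht Hx). nia.
Qed.

Lemma loc_large p t : allpos t -> prodl t < p -> forall i, loc p t i = 0.
Proof.
  intros H Hp i. unfold loc. destruct (Nat.lt_ge_cases i (length t)) as [Hi|Hi].
  - pose proof (In_le_prodl t _ H (nth_In t 0 Hi)).
    apply Logn.logn_small; [apply H, nth_In|]; lia.
  - rewrite nth_overflow by auto. apply prime.logn0.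
Qed.

Lemma eq_by_loc l t t' : length t = S l -> length t' = S l -> allpos t -> allpos t' ->
  (forall p, isprime p -> agree l (loc p t) (loc p t')) -> t = t'.
Proof.
  intros H1 H2 Ht Ht' H. apply nth_ext with (d := 0) (d' := 0); [congruence|].
  intros n Hn. apply Logn.eq_from_logn; [apply Ht, nth_In; auto|apply Ht', nth_In; lia|].
  intros p Hp. apply (H p Hp n). lia.
Qed.

(* The j-th entry of [lift t] has valuation [h (loc p t) j] at every prime p: beyond [prodl t] all
   valuations of t vanish, hence so do those prescribed by h. *)
Section Lift.
Variable l : nat.
Variable h : (nat -> nat) -> nat -> nat.
Hypothesis h_agree : forall x y, agree l x y -> agree l (h x) (h y).
Hypothesis h_zero : agree l (h (fun _ => 0)) (fun _ => 0).

Definition lift (t : list nat) : list nat :=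
  map (fun j => Logn.prime_prod (fun p => h (loc p t) j) (S (prodl t))) (seq 0 (S l)).

Lemma length_lift t : length (lift t) = S l.
Proof. unfold lift. now rewrite length_map, length_seq. Qed.

Lemma lift_pos t : allpos (lift t).
Proof. intros x Hx. apply in_map_iff in Hx as [j [<- _]]. apply Logn.prime_prod_pos. Qed.

Lemma loc_lift t p : allpos t -> isprime p -> agree l (loc p (lift t)) (h (loc p t)).
Proof.
  intros Ht Hp j Hj. unfold loc at 1, lift.
  set (f := fun j => Logn.prime_prod (fun p => h (loc p t) j) (S (prodl t))).
  rewrite nth_indep with (d' := f 0) by (rewrite length_map, length_seq; lia).
  unfold f at 1. rewrite map_nth, seq_nth, Logn.logn_prime_prod by (auto; lia).
  destruct (Nat.ltb_spec p (S (prodl t))); [reflexivity|].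
  symmetry. rewrite (h_agree (loc p t) (fun _ => 0)); auto.
  intros i _. apply loc_large; auto.
Qed.

End Lift.

Section Global.
Variables k l : nat.
Hypothesis Hk : 1 <= k.
Hypothesis Hl : 1 <= l.

(* [split_tuple] encodes a pair (n, (d_1, ..., d_l)) as the list n :: d_1 :: ... :: d_l. *)
Definition chain_tuple (t : list nat) : Prop :=
  length t = S l /\ allpos t /\ forall p, isprime p -> chain_exps k l (loc p t).
Definition split_tuple (y : list nat) : Prop :=
  length y = S l /\ allpos y /\ forall p, isprime p -> step_exp k l (loc p y 0).

Definition Phi : list nat -> list nat := lift l (local_phi k l).
Definition Psi : list nat -> list nat := lift l (local_psi k l).

Lemma loc_Phi t p : allpos t -> isprime p -> agree l (loc p (Phi t)) (local_phi k l (loc p t)).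
Proof. apply loc_lift; [apply local_phi_agree|apply local_phi_zero]; auto. Qed.

Lemma loc_Psi y p : allpos y -> isprime p -> agree l (loc p (Psi y)) (local_psi k l (loc p y)).
Proof. apply loc_lift; [apply local_psi_agree|apply local_psi_zero]; auto. Qed.

Lemma Phi_spec t : chain_tuple t -> split_tuple (Phi t) /\ Psi (Phi t) = t.
Proof.
  intros [H1 [H2 H3]].
  assert (GB : split_tuple (Phi t)).
  { split; [apply length_lift|split; [apply lift_pos|]].
    intros p Hp. rewrite (loc_Phi t p H2 Hp 0) by lia. apply local_phi_spec; auto. }
  split; auto.
  apply (eq_by_loc l); [apply length_lift|exact H1|apply lift_pos|exact H2|].
  intros p Hp. eapply agree_trans; [apply loc_Psi; auto; apply lift_pos|].
  eapply agree_trans; [apply local_psi_agree, loc_Phi; auto|]. apply local_phi_spec; auto.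
Qed.

Lemma Psi_spec y : split_tuple y -> chain_tuple (Psi y) /\ Phi (Psi y) = y.
Proof.
  intros [H1 [H2 H3]].
  assert (GA : chain_tuple (Psi y)).
  { split; [apply length_lift|split; [apply lift_pos|]].
    intros p Hp. apply (chain_exps_agree k l Hk Hl (local_psi k l (loc p y))).
    - apply agree_sym, loc_Psi; auto.
    - apply local_psi_spec; auto. }
  split; auto.
  apply (eq_by_loc l); [apply length_lift|exact H1|apply lift_pos|exact H2|].
  intros p Hp. eapply agree_trans; [apply loc_Phi; auto; apply lift_pos|].
  eapply agree_trans; [apply local_phi_agree, loc_Psi; auto|]. apply local_psi_spec; auto.
Qed.

Lemma split_weight_loc_Phi t p : chain_tuple t -> isprime p ->
  split_weight k l (loc p (Phi t)) = chain_weight k l (loc p t).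
Proof.
  intros [H1 [H2 H3]] Hp. rewrite (split_weight_agree k l Hk Hl _ _ (loc_Phi t p H2 Hp)).
  apply local_phi_spec; auto.
Qed.

End Global.

Lemma divide_pow_r_logn a b k : 0 < a -> 0 < b ->
  Nat.divide a (b ^ k) <-> forall p, isprime p -> logn p a <= k * logn p b.
Proof.
  intros Ha Hb. assert (0 < b ^ k) by (apply Nat.neq_0_lt_0, Nat.pow_nonzero; lia).
  rewrite Logn.divide_logn by auto. now setoid_rewrite Logn.logn_pow.
Qed.

Lemma divide_pow_logn a b k : 1 <= k -> 0 < a -> 0 < b ->
  Nat.divide (a ^ k) (b ^ k) <-> forall p, isprime p -> logn p a <= logn p b.
Proof.
  intros Hk Ha Hb. assert (0 < a ^ k) by (apply Nat.neq_0_lt_0, Nat.pow_nonzero; lia).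
  rewrite divide_pow_r_logn by auto. setoid_rewrite Logn.logn_pow.
  split; intros Hle p Hp; specialize (Hle p Hp); nia.
Qed.

Lemma allpos_nth (t : list nat) n : length t = n -> (allpos t <-> forall i, i < n -> 0 < nth i t 0).
Proof.
  intro Hlen. split.
  - intros H i Hi. apply H, nth_In. lia.
  - intros H x Hx. apply In_nth with (d := 0) in Hx as [i [Hi <-]]. apply H. lia.
Qed.

Section Tuples.
Variables k l : nat.
Hypothesis Hk : 1 <= k.
Hypothesis Hl : 1 <= l.

Lemma tuple_set_chain_tuple t : tuple_set k l t <-> chain_tuple k l t.
Proof.
  unfold tuple_set, chain_tuple, chain_exps, loc.
  split; intros [H1 [H2 H3]]; (split; [exact H1|]).
  - destruct H3 as [H3 H4]. split; [apply (allpos_nth t (S l) H1), H2|].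
    intros p Hp. split.
    + intros i Hi. replace (i + 1) with (S i) by lia.
      apply (divide_pow_logn _ _ k Hk); [apply H2; lia|apply H2; lia|apply H4; lia|exact Hp].
    + apply (divide_pow_r_logn _ _ k); [apply H2; lia|apply H2; lia|exact H3|exact Hp].
  - pose proof (proj1 (allpos_nth t (S l) H1) H2) as H2'. split; [exact H2'|split].
    + apply (divide_pow_r_logn _ _ k); [apply H2'; lia|apply H2'; lia|]. intros p Hp. apply H3, Hp.
    + intros i Hi. apply (divide_pow_logn _ _ k); [auto|apply H2'; lia|apply H2'; lia|].
      intros p Hp. replace (S i) with (i + 1) by lia. apply H3; auto. lia.
Qed.

Lemma step_powerful_logn m : 0 < m ->
  step_powerful k l m <-> forall p, isprime p -> step_exp k l (logn p m).
Proof.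
  intro Hm. unfold step_powerful, step_exp. split.
  - intros [_ H] p Hp. apply (H p); [apply Logn.nat_prime_isprime; auto|apply Logn.ord_is_logn; auto].
  - intro H. split; auto. intros p e Hp He. apply Logn.nat_prime_isprime in Hp.
    apply Logn.ord_is_logn in He as ->; auto.
Qed.

Lemma split_tuple_cons y : split_tuple k l y <->
  step_powerful k l (hd 0 y) /\ pos_list l (tl y) /\ y = hd 0 y :: tl y.
Proof.
  unfold split_tuple, pos_list. split.
  - intros [H1 [H2 H3]]. destruct y as [|m ds]; [discriminate|]. simpl in *.
    assert (Hm : 0 < m) by (apply H2; left; auto).
    split; [|split; [split; [lia|intros d Hd; apply H2; right; auto]|reflexivity]].
    apply step_powerful_logn; auto.
  - intros [H1 [[H2 H3] H4]]. rewrite H4. simpl.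
    split; [lia|split; [intros x [<-|Hx]; [apply H1|apply H3; auto]|]].
    intros p Hp. apply (step_powerful_logn (hd 0 y) (proj1 H1)); auto.
Qed.

Definition chain_value (t : list nat) : nat :=
  fold_right Nat.mul 1 (map (fun n => n ^ k) (firstn l t)) * nth l t 0.
Definition split_value (y : list nat) : nat := hd 0 y * weighted_pow k (seq 2 l) (tl y).

Lemma prod_pow_firstn_pos t n : allpos t -> 0 < fold_right Nat.mul 1 (map (fun m => m ^ k) (firstn n t)).
Proof.
  revert n; induction t as [|a t IH]; intros [|n] Ht; simpl; try lia.
  apply Nat.mul_pos_pos; [apply Nat.neq_0_lt_0, Nat.pow_nonzero; specialize (Ht a (or_introl eq_refl)); lia|].
  apply IH. intros x Hx; apply Ht; right; auto.
Qed.

Lemma logn_prod_pow_firstn p t n : allpos t -> n <= length t ->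
  logn p (fold_right Nat.mul 1 (map (fun m => m ^ k) (firstn n t))) = k * sumn (loc p t) n.
Proof.
  revert n; induction t as [|a t IH]; intros [|n] Ht Hn; simpl in *; try (rewrite prime.logn1; lia).
  assert (Ht' : allpos t) by (intros x Hx; apply Ht; right; auto).
  assert (Ha : 0 < a ^ k)
    by (apply Nat.neq_0_lt_0, Nat.pow_nonzero; specialize (Ht a (or_introl eq_refl)); lia).
  rewrite Logn.logn_mul, Logn.logn_pow, IH by (auto using prod_pow_firstn_pos; lia).
  change (sumn (loc p (a :: t)) n + loc p (a :: t) n) with (sumn (loc p (a :: t)) (S n)).
  rewrite sumn_shift. unfold loc. simpl. lia.
Qed.

Lemma logn_weighted_pow p a n ds : length ds = n -> allpos ds ->
  logn p (weighted_pow k (seq a n) ds) = k * sumn (fun i => (i + a) * logn p (nth i ds 0)) n.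
Proof.
  revert a ds; induction n; intros a ds Hlen Hp; [simpl; rewrite prime.logn1; lia|].
  destruct ds as [|d ds]; [discriminate|]. injection Hlen as Hlen.
  assert (Hd : 0 < d) by (apply Hp; left; auto).
  assert (Hp' : allpos ds) by (intros x Hx; apply Hp; right; auto).
  assert (Hdk : 0 < d ^ (a * k)) by (apply Nat.neq_0_lt_0, Nat.pow_nonzero; lia).
  simpl weighted_pow. rewrite Logn.logn_mul, Logn.logn_pow, IHn, sumn_shift by (auto using weighted_pow_pos).
  rewrite (sumn_ext (fun i => (S i + a) * logn p (nth (S i) (d :: ds) 0))
                    (fun i => (i + S a) * logn p (nth i ds 0)))
    by (intros; cbn [nth]; now replace (S i + a) with (i + S a) by lia).
  simpl. lia.
Qed.

Lemma chain_value_pos t : chain_tuple k l t -> 0 < chain_value t.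
Proof.
  intros [H1 [H2 _]]. apply Nat.mul_pos_pos; [apply prod_pow_firstn_pos; auto|].
  apply H2, nth_In. lia.
Qed.

Lemma split_value_pos y : split_tuple k l y -> 0 < split_value y.
Proof.
  intro H. apply split_tuple_cons in H as [H1 [[_ H2] _]].
  apply Nat.mul_pos_pos; [apply H1|apply weighted_pow_pos; auto].
Qed.

Lemma logn_chain_value t p : chain_tuple k l t -> logn p (chain_value t) = chain_weight k l (loc p t).
Proof.
  intros [H1 [H2 _]]. unfold chain_value, chain_weight.
  assert (0 < nth l t 0) by (apply H2, nth_In; lia).
  rewrite Logn.logn_mul, logn_prod_pow_firstn by (auto using prod_pow_firstn_pos; lia).
  reflexivity.
Qed.

Lemma logn_split_value y p : split_tuple k l y -> logn p (split_value y) = split_weight k l (loc p y).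
Proof.
  intro H. apply split_tuple_cons in H as [H1 [[H2 H3] H4]].
  destruct y as [|m ds]; [discriminate|]. simpl in *.
  unfold split_value. simpl.
  assert (0 < m) by apply H1.
  rewrite Logn.logn_mul, logn_weighted_pow by (auto using weighted_pow_pos).
  unfold split_weight, loc. simpl. f_equal. f_equal. apply sumn_ext. intros i Hi.
  now replace (i + 1) with (S i) by lia.
Qed.

Lemma chain_value_Phi t : chain_tuple k l t -> chain_value t = split_value (Phi k l t).
Proof.
  intro H. destruct (Phi_spec k l Hk Hl t H) as [HB _].
  apply Logn.eq_from_logn; [apply chain_value_pos; auto|apply split_value_pos; auto|].
  intros p Hp. rewrite logn_chain_value, logn_split_value, split_weight_loc_Phi; auto.
Qed.

End Tuples.

Open Scope R_scope.

Lemma has_sum_split_value (k l : nat) (s : C) : (1 <= k)%nat -> (1 <= l)%nat -> 1 < Re s ->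
  has_sum (fun y => cpow_neg (split_value k l y) s) (split_tuple k l)
    (Cmult (F_kl k l s) (zeta_prod k l s)).
Proof.
  intros Hk Hl Hs.
  destruct (has_sum_Rpower_decay (fun n => cpow_neg n s) (step_powerful k l) (Re s) Hs) as [F1 F2];
    [intros x Hx; apply Hx|intros x Hx; apply Cmod_cpow_neg, Hx|].
  destruct (has_sum_zeta_prod k s (seq 2 l) Hk Hs) as [Z1 Z2];
    [intros j Hj; apply in_seq in Hj; lia|].
  rewrite length_seq in Z1, Z2.
  eapply (has_sum_bij _ _ _ _ (fun y => (hd 0%nat y, tl y)) (fun p => fst p :: snd p));
    [| | | | |exact (has_sum_mul _ _ _ _ _ _ F1 Z1 F2 Z2)].
  - intros y Hy. apply split_tuple_cons in Hy as [H1 [H2 _]]; auto. split; auto.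
  - intros [m ds] [H1 H2]. apply split_tuple_cons; auto.
  - intros y Hy. apply split_tuple_cons in Hy as [_ [_ E]]; auto.
  - intros [m ds] _. reflexivity.
  - intros y Hy. apply split_tuple_cons in Hy as [H1 [[_ H2] _]]; auto.
    apply cpow_neg_mul; [apply H1|apply weighted_pow_pos; auto].
Qed.

Theorem theorem10 (k l : nat) (s : C) :
  (0 < k)%nat -> (0 < l)%nat -> (1 < Re s)%R ->
  has_sum (tuple_term k l s) (tuple_set k l) (Cmult (F_kl k l s) (zeta_prod k l s)).
Proof.
  intros Hk Hl Hs.
  pose proof (tuple_set_chain_tuple k l Hk Hl) as HT.
  apply (has_sum_bij _ (fun y => cpow_neg (split_value k l y) s) _ (split_tuple k l) (Phi k l) (Psi k l));
    [| | | | |exact (has_sum_split_value k l s Hk Hl Hs)].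
  - intros t Ht. apply Phi_spec, HT; auto.
  - intros y Hy. apply HT, Psi_spec; auto.
  - intros t Ht. apply Phi_spec, HT; auto.
  - intros y Hy. apply Psi_spec; auto.
  - intros t Ht. unfold tuple_term. f_equal. apply chain_value_Phi, HT; auto.
Qed.
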